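(* Under the assumptions of the preceding theorem ( $g:\mathbb{R}^n\to\mathbb{R}^s$ of class $C^2$, $D\subset\mathbb{R}^s$ closed, $\Gamma=g^{-1}(D)$, $\bar x\in\Gamma$, (A1), (A2), $\bar x^*\in\hat N_\Gamma(\bar x)$, and $\bar\lambda$ the unique vector with $\bar\lambda\in\hat N_D(g(\bar x))$, $\nabla g(\bar x)^T\bar\lambda=\bar x^*$), for every $w\in\mathbb{R}^n$, $$\hat D^*\hat N_\Gamma(\bar x,\bar x^* )(w)=\nabla^2\langle\bar\lambda,g\rangle(\bar x)w+\nabla g(\bar x)^T\,\hat D^*\hat N_D(g(\bar x),\bar\lambda)(\nabla g(\bar x)w).$$
   Context: Standing assumptions (A1), (A2) for $g:\mathbb{R}^n\to\mathbb{R}^s$ ($C^2$), closed $D\subset\mathbb{R}^s$, $\Gamma=g^{-1}(D)$, $\bar x\in\Gamma$: (A1) There exist a closed set $\Theta\subset\mathbb{R}^d$, a twice continuously differentiable mapping $h:\mathbb{R}^s\to\mathbb{R}^d$ and a neighborhood $\mathcal V$ of $g(\bar x)$ such that $\nabla h(g(\bar x))$ is surjective and $D\cap\mathcal V=\{z\in\mathcal V\mid h(z)\in\Theta\}$. (A2) $\operatorname{range}\nabla g(\bar x)+\ker\nabla h(g(\bar x))=\mathbb{R}^s$. Regular normal cone $\hat N_A(\bar a)=(T_A(\bar a))^\circ$ with $T_A(\bar a)=\limsup_{t\searrow0}(A-\bar a)/t$. For a multifunction $F:\mathbb{R}^n\rightrightarrows\mathbb{R}^z$ with $(\bar u,\bar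 v)\in\operatorname{gph}F$, the regular coderivative is $\hat D^*F(\bar u,\bar v)(v^* )=\{u^*\mid (u^*,-v^* )\in\hat N_{\operatorname{gph}F}(\bar u,\bar v)\}$. $\nabla^2\langle\lambda,g\rangle(x)$ is the Hessian of $x\mapsto\langle\lambda,g(x)\rangle$. *)

From Stdlib Require Import Reals.
From mathcomp Require Import all_boot.
Set Implicit Arguments. Unset Strict Implicit.

Local Open Scope R_scope.

Definition vec (I : finType) := I -> R.
Definition mat (I J : finType) := I -> J -> R.   (* linear maps vec J -> vec I *)

Definition vadd {I : finType} (u v : vec I) : vec I := fun i => u i + v i.
Definition vsub {I : finType} (u v : vec I) : vec I := fun i => u i - v i.
Definition vopp {I : finType} (u : vec I) : vec I := fun i => - u i.
Definition vscale {I : finType} (t : R) (u : vec I) : vec I := fun i => t * u i.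
Definition vzero {I : finType} : vec I := fun _ => 0.

Definition dot {I : finType} (u v : vec I) : R := \big[Rplus/0]_(i : I) (u i * v i).
Definition vnorm {I : finType} (u : vec I) : R := sqrt (dot u u).

Definition mulmv {I J : finType} (A : mat I J) (v : vec J) : vec I :=
  fun i => \big[Rplus/0]_(j : J) (A i j * v j).
Definition mulTmv {I J : finType} (A : mat I J) (y : vec I) : vec J :=
  fun j => \big[Rplus/0]_(i : I) (A i j * y i).

Definition is_open {I : finType} (A : vec I -> Prop) : Prop :=
  forall x, A x -> exists r, 0 < r /\ forall y, vnorm (vsub y x) < r -> A y.
Definition is_closed {I : finType} (A : vec I -> Prop) : Prop :=
  is_open (fun x => ~ A x).
Definition is_neighborhood {I : finType} (V : vec I -> Prop) (x : vec I) : Prop :=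
  exists r, 0 < r /\ forall y, vnorm (vsub y x) < r -> V y.

Definition seq_cv {I : finType} (u : nat -> vec I) (l : vec I) : Prop :=
  forall eps, 0 < eps -> exists N, forall k, (N <= k)%nat -> vnorm (vsub (u k) l) < eps.

Definition cont_at {I : finType} (f : vec I -> R) (x : vec I) : Prop :=
  forall eps, 0 < eps -> exists delta, 0 < delta /\
    forall y, vnorm (vsub y x) < delta -> Rabs (f y - f x) < eps.

Definition deriv_at {I J : finType} (f : vec I -> vec J) (A : mat J I) (x : vec I) : Prop :=
  forall eps, 0 < eps -> exists delta, 0 < delta /\
    forall y, vnorm (vsub y x) < delta ->
      vnorm (vsub (vsub (f y) (f x)) (mulmv A (vsub y x))) <= eps * vnorm (vsub y x).

(* gradient of a scalar function (scalars = vec unit) *)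
Definition grad_at {I : finType} (f : vec I -> R) (v : vec I) (x : vec I) : Prop :=
  deriv_at (fun y (_ : unit) => f y) (fun (_ : unit) j => v j) x.

Definition is_hessian {I : finType} (f : vec I -> R) (H : mat I I) (x : vec I) : Prop :=
  exists G : vec I -> vec I, (forall y, grad_at f (G y) y) /\ deriv_at G H x.

Definition C2 {I J : finType} (f : vec I -> vec J) : Prop :=
  exists (Jf : vec I -> mat J I) (K : vec I -> J -> mat I I),
    (forall x, deriv_at f (Jf x) x) /\
    (forall x k, deriv_at (fun y j => Jf y k j) (K x k) x) /\
    (forall x k i j, cont_at (fun y => K y k i j) x).

(* tangent cone T_A(a) = limsup_{t \searrow 0} (A - a)/t (sequential outer limit) *)
Definition tangent_cone {I : finType} (A : vec I -> Prop) (a : vec I) (w : vec I) : Prop :=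
  exists (t : nat -> R) (wk : nat -> vec I),
    (forall k, 0 < t k) /\ Un_cv t 0 /\ seq_cv wk w /\
    (forall k, A (vadd a (vscale (t k) (wk k)))).

Definition polar {I : finType} (K : vec I -> Prop) (v : vec I) : Prop :=
  forall w, K w -> dot v w <= 0.

(* regular normal cone, empty outside A *)
Definition regular_normal {I : finType} (A : vec I -> Prop) (a : vec I) (v : vec I) : Prop :=
  A a /\ polar (tangent_cone A a) v.

(* graph of a multifunction, as a subset of R^n x R^z = vec (I + J) *)
Definition vpair {I J : finType} (u : vec I) (v : vec J) : vec (I + J)%type :=
  fun k => match k with inl i => u i | inr j => v j end.
Definition gph {I J : finType} (F : vec I -> vec J -> Prop) : vec (I + J)%type -> Prop :=
  fun p => F (fun i => p (inl i)) (fun j => p (inr j)).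

(* regular coderivative: ustar \in \hat D^* F(u,v)(vstar) *)
Definition regular_coderiv {I J : finType} (F : vec I -> vec J -> Prop)
    (u : vec I) (v : vec J) (vstar : vec J) (ustar : vec I) : Prop :=
  regular_normal (gph F) (vpair u v) (vpair ustar (vopp vstar)).

From Stdlib Require Import Reals Lra FunctionalExtensionality ClassicalEpsilon Classical.
From HB Require Import structures.
From mathcomp Require Import all_boot.
Set Implicit Arguments. Unset Strict Implicit.
Local Open Scope R_scope.

(* Near xbar, (A1) and (A2) present Gamma as the preimage of Theta under
   F = h o g, whose Jacobian at xbar is onto; near g(xbar), D is likewise the
   preimage of Theta under h.  For a preimage Omega = F^-1(Theta) with onto
   Jacobian, a Newton iteration (Lyusternik-Graves) gives, near the base point,
   T_Omega(x) = F'(x)^-1 T_Theta(F x) and N_Omega(x) = F'(x)^T N_Theta(F x).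
   Following multipliers along sequences then shows that the tangent cone to
   gph N_Omega at (x0, F'(x0)^T mu) consists of the pairs
   (v, Hess<mu,F>(x0) v + F'(x0)^T xi) with (F'(x0) v, xi) tangent to
   gph N_Theta at (F x0, mu).  Writing this for F = h o g and for F = h, the
   chain rule Hess<mu,h o g> = Hess<lam,g> + g'^T Hess<mu,h> g' with
   lam = h'^T mu and the symmetry of Hessians (Schwarz) turn the two
   descriptions, after polarity, into the coderivative formula.  All estimates
   use the l1 norm, which is equivalent to the Euclidean one. *)

HB.instance Definition _ := Monoid.isComLaw.Build R 0 Rplus
  (fun a b c => esym (Rplus_assoc a b c)) Rplus_comm Rplus_0_l.
HB.instance Definition _ := Monoid.isComLaw.Build R 1 Rmult
  (fun a b c => esym (Rmult_assoc a b c)) Rmult_comm Rmult_1_l.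
HB.instance Definition _ := Monoid.isMulLaw.Build R 0 Rmult Rmult_0_l Rmult_0_r.
HB.instance Definition _ := Monoid.isAddLaw.Build R Rmult Rplus
  Rmult_plus_distr_r Rmult_plus_distr_l.

Section RealSums.
Variable I : finType.

Lemma sumR_le (F G : I -> R) : (forall i, F i <= G i) ->
  \big[Rplus/0]_(i : I) F i <= \big[Rplus/0]_(i : I) G i.
Proof. move=> H; apply: (big_ind2 (fun a b => a <= b)) => //; [lra | move=> *; lra]. Qed.

Lemma sumR_ge0 (F : I -> R) : (forall i, 0 <= F i) -> 0 <= \big[Rplus/0]_(i : I) F i.
Proof. move=> H; apply: (big_ind (fun a => 0 <= a)) => //; [lra| move=> *; lra]. Qed.

Lemma Rabs_sumR_le (F : I -> R) : Rabs (\big[Rplus/0]_(i : I) F i) <= \big[Rplus/0]_(i : I) Rabs (F i).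
Proof.
apply: (big_ind2 (fun a b => Rabs a <= b)).
- rewrite Rabs_R0; lra.
- move=> a b c e H1 H2. apply: Rle_trans (Rabs_triang _ _) _. lra.
- move=> i _; lra.
Qed.

Lemma sumR_opp (F : I -> R) : \big[Rplus/0]_(i : I) (- F i) = - \big[Rplus/0]_(i : I) F i.
Proof.
apply: (big_ind2 (fun a b => a = - b)) => [|a b c e -> ->|i _] //; ring.
Qed.

Lemma sumR_sub (F G : I -> R) : \big[Rplus/0]_(i : I) (F i - G i) =
  \big[Rplus/0]_(i : I) F i - \big[Rplus/0]_(i : I) G i.
Proof. rewrite /Rminus big_split sumR_opp //. Qed.

Lemma sumR_ge_term (F : I -> R) j : (forall i, 0 <= F i) -> F j <= \big[Rplus/0]_(i : I) F i.
Proof.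
move=> H. rewrite (bigD1 j) //=.
have : 0 <= \big[Rplus/0]_(i | i != j) F i.
  apply: (big_ind (fun a => 0 <= a)) => //; [lra| move=> *; lra].
lra.
Qed.

Lemma sumR_delta (F : I -> R) j : \big[Rplus/0]_(i : I) (if i == j then F i else 0) = F j.
Proof.
rewrite (bigD1 j) //= eqxx big1 ?Rplus_0_r // => i /negPf -> //.
Qed.

Lemma sumR_delta_sym (F : I -> R) j : \big[Rplus/0]_(i : I) (if j == i then F i else 0) = F j.
Proof.
rewrite -(sumR_delta F j); apply: eq_bigr => i _; by rewrite eq_sym.
Qed.

Lemma sumR_const (c : R) : \big[Rplus/0]_(i : I) c = INR #|I| * c.
Proof.
rewrite big_const. elim: #|I| => [|k IH]; first (simpl; ring).
rewrite iterS IH S_INR; ring.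
Qed.

End RealSums.

Definition norm1 {I : finType} (u : vec I) : R := \big[Rplus/0]_(i : I) Rabs (u i).
Definition mnorm {I J : finType} (A : mat I J) : R :=
  \big[Rplus/0]_(i : I) \big[Rplus/0]_(j : J) Rabs (A i j).
Definition mmul {K J I : finType} (B : mat K J) (A : mat J I) : mat K I :=
  fun k i => \big[Rplus/0]_(j : J) (B k j * A j i).
Definition madd {I J : finType} (A B : mat I J) : mat I J := fun i j => A i j + B i j.
Definition msub {I J : finType} (A B : mat I J) : mat I J := fun i j => A i j - B i j.
Definition mtr {I J : finType} (A : mat I J) : mat J I := fun j i => A i j.
Definition unitv {I : finType} (j : I) : vec I := fun i => if i == j then 1 else 0.

(* The constant of the equivalence between the l1 and Euclidean norms. *)
Definition cardR1 (I : finType) : R := INR #|I| + 1.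

Lemma vext {I : finType} (u v : vec I) : (forall i, u i = v i) -> u = v.
Proof. move=> H; apply: functional_extensionality; exact: H. Qed.

Lemma mext (I J : finType) (A B : mat I J) : (forall i j, A i j = B i j) -> A = B.
Proof. move=> H; do 2 (apply: functional_extensionality => ?); exact: H. Qed.

Lemma cardR1_gt0 (I : finType) : 0 < cardR1 I.
Proof. rewrite /cardR1; have := pos_INR #|I|; lra. Qed.

Section Norm1.
Variable I : finType.
Implicit Types u v w : vec I.

Lemma norm1_ge0 u : 0 <= norm1 u.
Proof. apply: sumR_ge0 => i; exact: Rabs_pos. Qed.

Lemma norm1_coord u i : Rabs (u i) <= norm1 u.
Proof. rewrite /norm1; apply: (@sumR_ge_term _ (fun i => Rabs (u i))) => j; exact: Rabs_pos. Qed.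

Lemma norm1_add u v : norm1 (vadd u v) <= norm1 u + norm1 v.
Proof. rewrite /norm1 -big_split /=; apply: sumR_le => i; exact: Rabs_triang. Qed.

Lemma norm1_sub u v : norm1 (vsub u v) <= norm1 u + norm1 v.
Proof. rewrite /norm1 -big_split /=; apply: sumR_le => i; rewrite /vsub -(Rabs_Ropp (v i)); exact: Rabs_triang. Qed.

Lemma norm1_scale t u : norm1 (vscale t u) = Rabs t * norm1 u.
Proof. rewrite /norm1 big_distrr /=; apply: eq_bigr => i _; exact: Rabs_mult. Qed.

Lemma norm1_opp u : norm1 (vopp u) = norm1 u.
Proof. apply: eq_bigr => i _; exact: Rabs_Ropp. Qed.

Lemma norm1_subC u v : norm1 (vsub u v) = norm1 (vsub v u).
Proof. apply: eq_bigr => i _; rewrite /vsub; exact: Rabs_minus_sym. Qed.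

Lemma norm1_triangle u v w : norm1 (vsub u w) <= norm1 (vsub u v) + norm1 (vsub v w).
Proof.
rewrite /norm1 -big_split /=; apply: sumR_le => i; rewrite /vsub.
replace (u i - w i) with ((u i - v i) + (v i - w i)) by ring; exact: Rabs_triang.
Qed.

Lemma norm1_zero : norm1 (@vzero I) = 0.
Proof. rewrite /norm1 /vzero; by rewrite big1 // => i _; rewrite Rabs_R0. Qed.

Lemma norm1_subvv u : norm1 (vsub u u) = 0.
Proof.
have -> : vsub u u = vzero by apply: vext => i; rewrite /vsub /vzero; ring.
exact: norm1_zero.
Qed.

Lemma norm1_eq0 u : norm1 u = 0 -> u = vzero.
Proof.
move=> H; apply: vext => i; have := norm1_coord u i; rewrite H /vzero => Hi.
have := Rabs_pos (u i) => Hp. have : Rabs (u i) = 0 by lra. rewrite /Rabs; case: Rcase_abs => _; lra.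
Qed.

Lemma norm1_le_eq0 u : (forall e, 0 < e -> norm1 u <= e) -> u = vzero.
Proof.
move=> H; apply: norm1_eq0; have := norm1_ge0 u => H0.
case: (Rle_lt_dec (norm1 u) 0) => Hc; first lra.
have := H (norm1 u / 2) ltac:(lra); lra.
Qed.

Lemma norm1_unitv (j : I) : norm1 (unitv j) = 1.
Proof.
rewrite /norm1 -(sumR_delta (fun _ => 1) j); apply: eq_bigr => i _; rewrite /unitv.
case: (i == j); rewrite ?Rabs_R1 ?Rabs_R0 //.
Qed.

Lemma dot_self u : dot u u = \big[Rplus/0]_(i : I) (Rabs (u i) * Rabs (u i)).
Proof. apply: eq_bigr => i _; rewrite -Rabs_mult Rabs_right //; apply: Rle_ge; nra. Qed.

Lemma vnorm_ge0 u : 0 <= vnorm u.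
Proof. exact: sqrt_pos. Qed.

Lemma vnorm_le_norm1 u : vnorm u <= norm1 u.
Proof.
rewrite /vnorm -(sqrt_square (norm1 u)); last exact: norm1_ge0.
apply: sqrt_le_1_alt. rewrite dot_self /norm1 big_distrl.
apply: sumR_le => i; apply: Rmult_le_compat_l; first exact: Rabs_pos.
exact: norm1_coord.
Qed.

Lemma coord_le_vnorm u i : Rabs (u i) <= vnorm u.
Proof.
rewrite -sqrt_Rsqr_abs /vnorm; apply: sqrt_le_1_alt; rewrite /Rsqr.
rewrite /dot. apply: (@sumR_ge_term _ (fun i => u i * u i)) => j; nra.
Qed.

Lemma norm1_le_vnorm u : norm1 u <= cardR1 I * vnorm u.
Proof.
apply: Rle_trans (_ : \big[Rplus/0]_(i : I) vnorm u <= _).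
  apply: sumR_le => i; exact: coord_le_vnorm.
rewrite sumR_const /cardR1; have := vnorm_ge0 u; nra.
Qed.

Lemma dot_sym u v : dot u v = dot v u.
Proof. apply: eq_bigr => i _; ring. Qed.

Lemma dot_bound u v : Rabs (dot u v) <= norm1 u * norm1 v.
Proof.
apply: Rle_trans (Rabs_sumR_le _) _. rewrite /norm1 big_distrl.
apply: sumR_le => i; rewrite Rabs_mult; apply: Rmult_le_compat_l; first exact: Rabs_pos.
exact: norm1_coord.
Qed.

Lemma dot_addl u v w : dot (vadd u v) w = dot u w + dot v w.
Proof. rewrite /dot -big_split /=; apply: eq_bigr => i _; rewrite /vadd; ring. Qed.
Lemma dot_addr u v w : dot w (vadd u v) = dot w u + dot w v.
Proof. rewrite /dot -big_split /=; apply: eq_bigr => i _; rewrite /vadd; ring. Qed.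
Lemma dot_subl u v w : dot (vsub u v) w = dot u w - dot v w.
Proof. rewrite /dot -sumR_sub; apply: eq_bigr => i _; rewrite /vsub; ring. Qed.
Lemma dot_subr u v w : dot w (vsub u v) = dot w u - dot w v.
Proof. rewrite /dot -sumR_sub; apply: eq_bigr => i _; rewrite /vsub; ring. Qed.
Lemma dot_scalel t u w : dot (vscale t u) w = t * dot u w.
Proof. rewrite /dot big_distrr /=; apply: eq_bigr => i _; rewrite /vscale; ring. Qed.
Lemma dot_oppl u w : dot (vopp u) w = - dot u w.
Proof. rewrite /dot -sumR_opp; apply: eq_bigr => i _; rewrite /vopp; ring. Qed.
Lemma dot_zeror w : dot w (@vzero I) = 0.
Proof. rewrite /dot big1 // => i _; rewrite /vzero; ring. Qed.
Lemma dot_unitv u j : dot u (unitv j) = u j.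
Proof.
rewrite /dot -(sumR_delta u j); apply: eq_bigr => i _; rewrite /unitv; case: (i == j); ring.
Qed.

End Norm1.

Section Matrices.
Variables I J K : finType.

Lemma mnorm_ge0 (A : mat I J) : 0 <= mnorm A.
Proof. apply: sumR_ge0 => i; apply: sumR_ge0 => j; exact: Rabs_pos. Qed.

Lemma mnorm_add (A B : mat I J) : mnorm (madd A B) <= mnorm A + mnorm B.
Proof.
rewrite /mnorm -big_split /=; apply: sumR_le => i; rewrite -big_split /=; apply: sumR_le => j.
exact: Rabs_triang.
Qed.

Lemma mulmv_bound (A : mat I J) (v : vec J) : norm1 (mulmv A v) <= mnorm A * norm1 v.
Proof.
rewrite /norm1 /mnorm big_distrl /=; apply: sumR_le => i.
apply: Rle_trans (Rabs_sumR_le _) _. rewrite big_distrl /=; apply: sumR_le => j.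
rewrite Rabs_mult; apply: Rmult_le_compat_l; first exact: Rabs_pos.
exact: norm1_coord.
Qed.

Lemma mulTmv_bound (A : mat I J) (y : vec I) : norm1 (mulTmv A y) <= mnorm A * norm1 y.
Proof.
rewrite /norm1 /mnorm exchange_big big_distrl /=; apply: sumR_le => j.
apply: Rle_trans (Rabs_sumR_le _) _. rewrite big_distrl /=; apply: sumR_le => i.
rewrite Rabs_mult; apply: Rmult_le_compat_l; first exact: Rabs_pos.
exact: norm1_coord.
Qed.

Lemma mulmv_add (A : mat I J) u v : mulmv A (vadd u v) = vadd (mulmv A u) (mulmv A v).
Proof. apply: vext => i; rewrite /mulmv /vadd -big_split /=; apply: eq_bigr => j _; ring. Qed.
Lemma mulmv_sub (A : mat I J) u v : mulmv A (vsub u v) = vsub (mulmv A u) (mulmv A v).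
Proof. apply: vext => i; rewrite /mulmv /vsub -sumR_sub; apply: eq_bigr => j _; ring. Qed.
Lemma mulmv_scale (A : mat I J) t u : mulmv A (vscale t u) = vscale t (mulmv A u).
Proof. apply: vext => i; rewrite /mulmv /vscale big_distrr /=; apply: eq_bigr => j _; ring. Qed.
Lemma mulmv_opp (A : mat I J) u : mulmv A (vopp u) = vopp (mulmv A u).
Proof. apply: vext => i; rewrite /mulmv /vopp -sumR_opp; apply: eq_bigr => j _; ring. Qed.
Lemma mulmv_zero (A : mat I J) : mulmv A vzero = vzero.
Proof. apply: vext => i; rewrite /mulmv /vzero big1 // => j _; ring. Qed.
Lemma mulmv_madd (A B : mat I J) u : mulmv (madd A B) u = vadd (mulmv A u) (mulmv B u).
Proof. apply: vext => i; rewrite /mulmv /vadd -big_split /=; apply: eq_bigr => j _; rewrite /madd; ring. Qed.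
Lemma mulmv_msub (A B : mat I J) u : mulmv (msub A B) u = vsub (mulmv A u) (mulmv B u).
Proof. apply: vext => i; rewrite /mulmv /vsub -sumR_sub; apply: eq_bigr => j _; rewrite /msub; ring. Qed.

Lemma mulmv_mtr (A : mat J I) y : mulmv (mtr A) y = mulTmv A y.
Proof. by []. Qed.
Lemma mnorm_mtr (A : mat I J) : mnorm (mtr A) = mnorm A.
Proof. by rewrite /mnorm exchange_big. Qed.
Lemma msub_mtr (A B : mat J I) : msub (mtr A) (mtr B) = mtr (msub A B).
Proof. by []. Qed.

Lemma mulTmv_add (A : mat J I) u v : mulTmv A (vadd u v) = vadd (mulTmv A u) (mulTmv A v).
Proof. exact: (mulmv_add (mtr A)). Qed.
Lemma mulTmv_sub (A : mat J I) u v : mulTmv A (vsub u v) = vsub (mulTmv A u) (mulTmv A v).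
Proof. exact: (mulmv_sub (mtr A)). Qed.
Lemma mulTmv_scale (A : mat J I) t u : mulTmv A (vscale t u) = vscale t (mulTmv A u).
Proof. exact: (mulmv_scale (mtr A)). Qed.
Lemma mulTmv_msub (A B : mat J I) u : mulTmv (msub A B) u = vsub (mulTmv A u) (mulTmv B u).
Proof. apply: vext => i; rewrite /mulTmv /vsub -sumR_sub; apply: eq_bigr => j _; rewrite /msub; ring. Qed.

Lemma dot_mulmv (A : mat I J) v y : dot (mulmv A v) y = dot v (mulTmv A y).
Proof.
rewrite /dot /mulmv /mulTmv.
transitivity (\big[Rplus/0]_(i : I) \big[Rplus/0]_(j : J) (A i j * v j * y i)).
  apply: eq_bigr => i _; rewrite big_distrl /=; apply: eq_bigr => j _; ring.
rewrite exchange_big; apply: eq_bigr => j _; rewrite big_distrr /=; apply: eq_bigr => i _; ring.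
Qed.

Lemma dot_mulTmv (A : mat J I) (u : vec I) (y : vec J) :
  dot (mulTmv A y) u = dot y (mulmv A u).
Proof. by rewrite dot_sym -dot_mulmv dot_sym. Qed.

Lemma mulmv_mmul (B : mat K J) (A : mat J I) v : mulmv (mmul B A) v = mulmv B (mulmv A v).
Proof.
apply: vext => k; rewrite /mulmv /mmul.
transitivity (\big[Rplus/0]_(i : I) \big[Rplus/0]_(j : J) (B k j * A j i * v i)).
  apply: eq_bigr => i _; rewrite big_distrl /=; apply: eq_bigr => j _; ring.
rewrite exchange_big; apply: eq_bigr => j _; rewrite big_distrr /=; apply: eq_bigr => i _; ring.
Qed.

Lemma mulTmv_mmul (B : mat K J) (A : mat J I) y : mulTmv (mmul B A) y = mulTmv A (mulTmv B y).
Proof.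
apply: vext => i; rewrite /mulTmv /mmul.
transitivity (\big[Rplus/0]_(k : K) \big[Rplus/0]_(j : J) (B k j * A j i * y k)).
  apply: eq_bigr => k _; rewrite big_distrl /=; apply: eq_bigr => j _; ring.
rewrite exchange_big; apply: eq_bigr => j _; rewrite big_distrr /=; apply: eq_bigr => k _; ring.
Qed.

Lemma mnorm_mmul (B : mat K J) (A : mat J I) : mnorm (mmul B A) <= mnorm B * mnorm A.
Proof.
rewrite /mnorm /mmul big_distrl /=; apply: sumR_le => k.
apply: (Rle_trans _ (\big[Rplus/0]_(i : I) \big[Rplus/0]_(j : J) (Rabs (B k j) * Rabs (A j i)))).
  apply: sumR_le => i; apply: Rle_trans (Rabs_sumR_le _) _; apply: sumR_le => j; rewrite Rabs_mult; lra.
rewrite exchange_big big_distrl /=; apply: sumR_le => j.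
rewrite -(big_distrr (times := Rmult)); apply: Rmult_le_compat_l; first exact: Rabs_pos.
apply: (@sumR_ge_term J (fun j => \big[Rplus/0]_(i : I) Rabs (A j i)) j) => j'.
apply: sumR_ge0 => i; exact: Rabs_pos.
Qed.

Lemma mulmv_unitv (A : mat I J) j : mulmv A (unitv j) = fun i => A i j.
Proof.
apply: vext => i; rewrite /mulmv -(sumR_delta_sym (fun j => A i j) j); apply: eq_bigr => k _.
rewrite /unitv eq_sym; case: (j == k); ring.
Qed.

Lemma vec_unitv_decomp (v : vec J) : v = fun i => \big[Rplus/0]_(j : J) (v j * unitv j i).
Proof.
apply: vext => i; rewrite -(sumR_delta_sym v i); apply: eq_bigr => j _; rewrite /unitv.
case: (i == j); ring.
Qed.

End Matrices.

Lemma dot_mulmv_sym (I : finType) (Hm : mat I I) : (forall i j, Hm i j = Hm j i) ->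
  forall u v, dot (mulmv Hm u) v = dot u (mulmv Hm v).
Proof.
move=> Hs u v; rewrite dot_mulmv; congr dot; apply: vext => i.
rewrite /mulTmv /mulmv; apply: eq_bigr => j _; rewrite Hs //.
Qed.

Lemma surj_rinv (I J : finType) (A : mat J I) :
  (forall y : vec J, exists z : vec I, mulmv A z = y) ->
  exists R : mat I J, forall y, mulmv A (mulmv R y) = y.
Proof.
move=> H.
pose z := fun j => proj1_sig (constructive_indefinite_description _ (H (unitv j))).
have Hz : forall j, mulmv A (z j) = unitv j.
  move=> j; exact: (proj2_sig (constructive_indefinite_description _ (H (unitv j)))).
exists (fun i j => z j i) => y.
rewrite -mulmv_mmul; apply: vext => k; rewrite /mulmv /mmul.
transitivity ((fun i => \big[Rplus/0]_(j : J) (y j * unitv j i)) k); last by symmetry; exact: (f_equal (fun f => f k) (vec_unitv_decomp y)).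
cbv beta; apply: eq_bigr => j _.
have E := f_equal (fun f => f k) (Hz j); rewrite /mulmv in E; rewrite E; ring.
Qed.

Lemma mulTmv_rinv (I J : finType) (A : mat J I) (R0 : mat I J) :
  (forall y, mulmv A (mulmv R0 y) = y) -> forall eta, mulTmv R0 (mulTmv A eta) = eta.
Proof.
move=> HR eta; apply: vext => j.
rewrite -[LHS](dot_unitv (mulTmv R0 (mulTmv A eta)) j) -[RHS](dot_unitv eta j).
rewrite !dot_mulTmv HR //.
Qed.

Lemma ker_polar_range (I J : finType) (C : mat J I) (Rc : mat I J) (p : vec I) :
  (forall y, mulmv C (mulmv Rc y) = y) -> (forall v, mulmv C v = vzero -> dot p v <= 0) ->
  p = mulTmv C (mulTmv Rc p).
Proof.
move=> HR Hker.
have Hkey : forall v, dot p v = dot p (mulmv Rc (mulmv C v)).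
  move=> v; have E : forall a : vec J, vsub a a = vzero
    by move=> a; apply: vext => i; rewrite /vsub /vzero; ring.
  have := Hker (vsub v (mulmv Rc (mulmv C v))); have := Hker (vsub (mulmv Rc (mulmv C v)) v).
  rewrite !mulmv_sub HR !dot_subr => H1 H2; have := H1 (E _); have := H2 (E _); lra.
by apply: vext => i; rewrite -(dot_unitv p i) Hkey -!dot_mulTmv dot_unitv.
Qed.

Lemma div_succ_le (k e : R) : 0 <= k -> 0 <= e -> k * (e / (k + 1)) <= e.
Proof.
move=> Hk He; apply: (Rmult_le_reg_r (k + 1)); first lra.
replace (k * (e / (k + 1)) * (k + 1)) with (k * e) by (field; lra); nra.
Qed.

Definition near {I : finType} (x : vec I) (P : vec I -> Prop) : Prop :=
  exists delta, 0 < delta /\ forall y, norm1 (vsub y x) < delta -> P y.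

Definition is_fderiv {I J : finType} (f : vec I -> vec J) (A : mat J I) (x : vec I) : Prop :=
  forall eps, 0 < eps -> near x (fun y =>
    norm1 (vsub (vsub (f y) (f x)) (mulmv A (vsub y x))) <= eps * norm1 (vsub y x)).

Definition cont_vec {I J : finType} (f : vec I -> vec J) (x : vec I) : Prop :=
  forall eps, 0 < eps -> near x (fun y => norm1 (vsub (f y) (f x)) < eps).

Definition cont_mat {I J K : finType} (M : vec I -> mat J K) (x : vec I) : Prop :=
  forall eps, 0 < eps -> near x (fun y => mnorm (msub (M y) (M x)) < eps).

Section Near.
Variables (I : finType) (x : vec I).
Implicit Types P Q : vec I -> Prop.

Lemma near_mono P Q : near x P -> (forall y, P y -> Q y) -> near x Q.
Proof. by move=> [d [Hd HP]] HPQ; exists d; split=> // y /HP /HPQ. Qed.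

Lemma near_and P Q : near x P -> near x Q -> near x (fun y => P y /\ Q y).
Proof.
move=> [d1 [Hd1 H1]] [d2 [Hd2 H2]]; exists (Rmin d1 d2); split; first exact: Rmin_glb_lt.
move=> y Hy; split; [apply: H1 | apply: H2]; apply: Rlt_le_trans Hy _;
  [exact: Rmin_l | exact: Rmin_r].
Qed.

Lemma near_ball r : 0 < r -> near x (fun y => norm1 (vsub y x) < r).
Proof. by move=> Hr; exists r. Qed.

Lemma near_all (K : finType) (P : K -> vec I -> Prop) :
  (forall k, near x (P k)) -> near x (fun y => forall k, P k y).
Proof.
move=> H.
suff [d [Hd Hs]] : near x (fun y => forall k, k \in enum K -> P k y).
  by exists d; split=> // y /Hs Hy k; apply: Hy; rewrite mem_enum.
elim: (enum K) => [|a s IH].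
  by exists 1; split=> [|y _ k]; [lra | rewrite in_nil].
apply: (near_mono (near_and (H a) IH)) => y [Ha Hs] k.
by rewrite inE => /orP [/eqP -> //|]; exact: Hs.
Qed.

End Near.

Lemma deriv_at_fderiv (I J : finType) (f : vec I -> vec J) A x :
  deriv_at f A x <-> is_fderiv f A x.
Proof.
have KIp := cardR1_gt0 I; have KJp := cardR1_gt0 J.
split=> H eps Heps.
- have [d [Hd Hy]] := H (eps / cardR1 J) ltac:(apply: Rdiv_lt_0_compat; lra).
  exists d; split=> // y Hyx.
  have := Hy y (Rle_lt_trans _ _ _ (vnorm_le_norm1 _) Hyx); set E := vsub _ _ => HE.
  apply: Rle_trans (norm1_le_vnorm E) _.
  have := vnorm_le_norm1 (vsub y x); have := vnorm_ge0 (vsub y x) => *.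
  apply: Rle_trans (_ : cardR1 J * (eps / cardR1 J * vnorm (vsub y x)) <= _).
    by apply: Rmult_le_compat_l; lra.
  replace (cardR1 J * (eps / cardR1 J * vnorm (vsub y x))) with (eps * vnorm (vsub y x))
    by (field; lra).
  apply: Rmult_le_compat_l; lra.
- have [d [Hd Hy]] := H (eps / cardR1 I) ltac:(apply: Rdiv_lt_0_compat; lra).
  exists (d / cardR1 I); split; first by apply: Rdiv_lt_0_compat; lra.
  move=> y Hyx.
  have Hn : norm1 (vsub y x) < d.
    apply: Rle_lt_trans (norm1_le_vnorm _) _.
    replace d with (cardR1 I * (d / cardR1 I)) by (field; lra).
    exact: Rmult_lt_compat_l.
  have := Hy y Hn; set E := vsub _ _ => HE.
  apply: Rle_trans (vnorm_le_norm1 E) _; apply: Rle_trans HE _.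
  have := norm1_le_vnorm (vsub y x); have := vnorm_ge0 (vsub y x) => *.
  replace (eps * vnorm (vsub y x)) with (eps / cardR1 I * (cardR1 I * vnorm (vsub y x)))
    by (field; lra).
  apply: Rmult_le_compat_l => //; apply: Rlt_le; apply: Rdiv_lt_0_compat; lra.
Qed.

Section Fderiv.
Variables I J K : finType.

Lemma fderiv_ext (f g : vec I -> vec J) A x :
  (forall y, f y = g y) -> is_fderiv f A x -> is_fderiv g A x.
Proof. by move=> E; have -> : g = f by apply: functional_extensionality => y; rewrite E. Qed.

Lemma fderiv_lipschitz (f : vec I -> vec J) A x : is_fderiv f A x ->
  near x (fun y => norm1 (vsub (f y) (f x)) <= (mnorm A + 1) * norm1 (vsub y x)).
Proof.
move=> H; apply: (near_mono (H 1 Rlt_0_1)) => y Hy.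
have -> : vsub (f y) (f x) =
    vadd (vsub (vsub (f y) (f x)) (mulmv A (vsub y x))) (mulmv A (vsub y x)).
  by apply: vext => i; rewrite /vadd /vsub; ring.
apply: Rle_trans (norm1_add _ _) _; have := mulmv_bound A (vsub y x); lra.
Qed.

Lemma fderiv_cont (f : vec I -> vec J) A x : is_fderiv f A x -> cont_vec f x.
Proof.
move=> H eps Heps; have Hm := mnorm_ge0 A.
have He : 0 < eps / (mnorm A + 2) by apply: Rdiv_lt_0_compat; lra.
apply: (near_mono (near_and (fderiv_lipschitz H) (near_ball x He))) => y [Hl Hy].
apply: Rle_lt_trans Hl _; have := norm1_ge0 (vsub y x) => H0.
apply: Rle_lt_trans (_ : (mnorm A + 1) * norm1 (vsub y x) <= (mnorm A + 2) * norm1 (vsub y x)) _.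
  nra.
replace eps with ((mnorm A + 2) * (eps / (mnorm A + 2))) by (field; lra).
apply: Rmult_lt_compat_l; lra.
Qed.

Lemma fderiv_unique (f : vec I -> vec J) A B x : is_fderiv f A x -> is_fderiv f B x -> A = B.
Proof.
move=> HA HB.
suff Hc : forall j, mulmv (msub A B) (unitv j) = vzero.
  apply: functional_extensionality => i; apply: functional_extensionality => j.
  have := f_equal (fun v => v i) (Hc j); rewrite mulmv_unitv /msub /vzero => E; lra.
move=> j; apply: norm1_le_eq0 => e He.
have [da [Hda Ha]] := HA (e/2) ltac:(lra).
have [db [Hdb Hb]] := HB (e/2) ltac:(lra).
set t := Rmin da db / 2.
have Ht : 0 < t by rewrite /t; apply: Rdiv_lt_0_compat; [apply: Rmin_glb_lt|]; lra.
set y := vadd x (vscale t (unitv j)).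
have Hyx : vsub y x = vscale t (unitv j) by apply: vext => i; rewrite /y /vsub /vadd; ring.
have Hn : norm1 (vsub y x) = t by rewrite Hyx norm1_scale norm1_unitv Rabs_right; lra.
have Hlt1 : norm1 (vsub y x) < da by rewrite Hn /t; have := Rmin_l da db; lra.
have Hlt2 : norm1 (vsub y x) < db by rewrite Hn /t; have := Rmin_r da db; lra.
have := Ha y Hlt1; have := Hb y Hlt2. rewrite Hn Hyx => H2 H1.
have E : vscale t (mulmv (msub A B) (unitv j)) =
  vsub (vsub (vsub (f y) (f x)) (mulmv B (vscale t (unitv j))))
       (vsub (vsub (f y) (f x)) (mulmv A (vscale t (unitv j)))).
  rewrite !mulmv_scale mulmv_msub; apply: vext => i; rewrite /vsub /vscale; ring.
have : norm1 (vscale t (mulmv (msub A B) (unitv j))) <= e * t.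
  rewrite E; apply: Rle_trans (norm1_sub _ _) _; lra.
rewrite norm1_scale Rabs_right; last lra.
move=> Hle. have : t * norm1 (mulmv (msub A B) (unitv j)) <= t * e by lra.
move/(Rmult_le_reg_l _ _ _ Ht). done.
Qed.

Lemma fderiv_add (f g : vec I -> vec J) A B x :
  is_fderiv f A x -> is_fderiv g B x -> is_fderiv (fun y => vadd (f y) (g y)) (madd A B) x.
Proof.
move=> Hf Hg eps Heps.
apply: (near_mono (near_and (Hf (eps / 2) ltac:(lra)) (Hg (eps / 2) ltac:(lra)))) => y [B1 B2].
have -> : vsub (vsub (vadd (f y) (g y)) (vadd (f x) (g x))) (mulmv (madd A B) (vsub y x)) =
    vadd (vsub (vsub (f y) (f x)) (mulmv A (vsub y x)))
         (vsub (vsub (g y) (g x)) (mulmv B (vsub y x))).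
  by rewrite mulmv_madd; apply: vext => i; rewrite /vadd /vsub; ring.
apply: Rle_trans (norm1_add _ _) _; lra.
Qed.

Lemma fderiv_scale (c : R) (f : vec I -> vec J) A x :
  is_fderiv f A x -> is_fderiv (fun y => vscale c (f y)) (fun j i => c * A j i) x.
Proof.
move=> Hf eps Heps; have Hc := Rabs_pos c.
have He : 0 < eps / (Rabs c + 1) by apply: Rdiv_lt_0_compat; lra.
apply: (near_mono (Hf _ He)) => y Hy.
have -> : vsub (vsub (vscale c (f y)) (vscale c (f x))) (mulmv (fun j i => c * A j i) (vsub y x))
    = vscale c (vsub (vsub (f y) (f x)) (mulmv A (vsub y x))).
  apply: vext => j; rewrite /vsub /vscale /mulmv.
  have -> : \big[Rplus/0]_(i : I) (c * A j i * (y i - x i)) =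
      c * \big[Rplus/0]_(i : I) (A j i * (y i - x i)).
    by rewrite big_distrr /=; apply: eq_bigr => i _; ring.
  ring.
rewrite norm1_scale; apply: Rle_trans (Rmult_le_compat_l _ _ _ Hc Hy) _.
rewrite -Rmult_assoc; apply: Rmult_le_compat_r; first exact: norm1_ge0.
apply: div_succ_le; lra.
Qed.

Lemma fderiv_zero x : is_fderiv (fun _ : vec I => @vzero J) (fun _ _ => 0) x.
Proof.
move=> eps Heps; exists 1; split=> [|y _]; first lra.
have -> : vsub (vsub vzero vzero) (mulmv (fun _ _ => 0) (vsub y x)) = @vzero J.
  apply: vext => j; rewrite /vsub /vzero /mulmv big1 => [|i _]; ring.
rewrite norm1_zero; have := norm1_ge0 (vsub y x); nra.
Qed.

Lemma fderiv_sum (f : K -> vec I -> vec J) (L : K -> mat J I) (cf : K -> R) x :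
  (forall k, is_fderiv (f k) (L k) x) ->
  is_fderiv (fun y j => \big[Rplus/0]_(k : K) (cf k * f k y j))
    (fun j i => \big[Rplus/0]_(k : K) (cf k * L k j i)) x.
Proof.
move=> Hf; elim: (index_enum K) => [|k s IH].
  have -> : (fun j i => \big[Rplus/0]_(k <- [::]) (cf k * L k j i)) = (fun _ _ => 0)
    by apply: mext => j i; rewrite big_nil.
  apply: (fderiv_ext (f := fun _ => vzero)); last exact: fderiv_zero.
  by move=> y; apply: vext => j; rewrite big_nil.
have := fderiv_add (fderiv_scale (cf k) (Hf k)) IH.
have -> : madd (fun j i => cf k * L k j i)
    (fun j i => \big[Rplus/0]_(k0 <- s) (cf k0 * L k0 j i)) =
    (fun j i => \big[Rplus/0]_(k0 <- k :: s) (cf k0 * L k0 j i))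
  by apply: mext => j i; rewrite big_cons.
by apply: fderiv_ext => y; apply: vext => j; rewrite big_cons.
Qed.

Lemma fderiv_mulmv_l (f : vec I -> vec J) (P : mat K J) A x :
  is_fderiv f A x -> is_fderiv (fun y => mulmv P (f y)) (mmul P A) x.
Proof.
move=> H eps Heps; have Hm := mnorm_ge0 P.
have He : 0 < eps / (mnorm P + 1) by apply: Rdiv_lt_0_compat; lra.
apply: (near_mono (H _ He)) => y Hy.
rewrite mulmv_mmul -!mulmv_sub; apply: Rle_trans (mulmv_bound _ _) _.
apply: Rle_trans (Rmult_le_compat_l _ _ _ Hm Hy) _.
rewrite -Rmult_assoc; apply: Rmult_le_compat_r; first exact: norm1_ge0.
apply: div_succ_le; lra.
Qed.

Lemma fderiv_sub_lin (f : vec I -> vec J) M A x :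
  is_fderiv f M x -> is_fderiv (fun y => vsub (f y) (mulmv A y)) (msub M A) x.
Proof.
move=> H eps Heps; have [d [Hd Hy]] := H eps Heps; exists d; split=> // y Hyx.
have -> : vsub (vsub (vsub (f y) (mulmv A y)) (vsub (f x) (mulmv A x))) (mulmv (msub M A) (vsub y x))
   = vsub (vsub (f y) (f x)) (mulmv M (vsub y x)).
  rewrite mulmv_msub !mulmv_sub; apply: vext => i; rewrite /vsub; ring.
exact: Hy.
Qed.

Lemma fderiv_comp (g : vec I -> vec J) (h : vec J -> vec K) A B x :
  is_fderiv g A x -> is_fderiv h B (g x) -> is_fderiv (fun y => h (g y)) (mmul B A) x.
Proof.
move=> Hg Hh eps Heps.
have HmA := mnorm_ge0 A; have HmB := mnorm_ge0 B.
have He1 : 0 < eps / 2 / (mnorm A + 1) by apply: Rdiv_lt_0_compat; lra.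
have [dh [Hdh Hh']] := Hh _ He1.
have Hdh' : 0 < dh / (mnorm A + 1) by apply: Rdiv_lt_0_compat; lra.
have He2 : 0 < eps / 2 by lra.
apply: (near_mono (near_and (near_and (fderiv_lipschitz Hg) (near_ball x Hdh'))
  (fderiv_mulmv_l B Hg He2))) => y [[HL Hy] HB].
have Hgh : norm1 (vsub (g y) (g x)) < dh.
  apply: Rle_lt_trans HL _; replace dh with ((mnorm A + 1) * (dh / (mnorm A + 1))) by (field; lra).
  apply: Rmult_lt_compat_l; lra.
have -> : vsub (vsub (h (g y)) (h (g x))) (mulmv (mmul B A) (vsub y x)) =
   vadd (vsub (vsub (h (g y)) (h (g x))) (mulmv B (vsub (g y) (g x))))
        (vsub (vsub (mulmv B (g y)) (mulmv B (g x))) (mulmv (mmul B A) (vsub y x))).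
  rewrite !mulmv_sub; apply: vext => i; rewrite /vadd /vsub; ring.
apply: Rle_trans (norm1_add _ _) _.
have := Hh' _ Hgh; have := norm1_ge0 (vsub y x) => H0 H1.
suff : eps / 2 / (mnorm A + 1) * norm1 (vsub (g y) (g x)) <= eps / 2 * norm1 (vsub y x) by lra.
apply: Rle_trans (Rmult_le_compat_l _ _ _ (Rlt_le _ _ He1) HL) _.
by right; field; lra.
Qed.

End Fderiv.

Lemma fderiv_mulTmv (I J : finType) (P : vec I -> mat J I) (q : vec I -> vec J) x0 H1 Q :
  cont_mat P x0 -> is_fderiv (fun x => mulTmv (P x) (q x0)) H1 x0 -> is_fderiv q Q x0 ->
  is_fderiv (fun x => mulTmv (P x) (q x)) (madd H1 (mmul (mtr (P x0)) Q)) x0.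
Proof.
move=> HP HH HQ eps He; have HmQ := mnorm_ge0 Q.
have He3 : 0 < eps / 3 by lra.
have He3' : 0 < eps / 3 / (mnorm Q + 1) by apply: Rdiv_lt_0_compat; lra.
apply: (near_mono (near_and (near_and (HH _ He3) (fderiv_mulmv_l (mtr (P x0)) HQ He3))
  (near_and (HP _ He3') (fderiv_lipschitz HQ)))) => y [[B1 B2] [B3 B4]].
set Py := msub (P y) (P x0).
have -> : vsub (vsub (mulTmv (P y) (q y)) (mulTmv (P x0) (q x0)))
      (mulmv (madd H1 (mmul (mtr (P x0)) Q)) (vsub y x0)) =
    vadd (vadd (vsub (vsub (mulTmv (P y) (q x0)) (mulTmv (P x0) (q x0))) (mulmv H1 (vsub y x0)))
      (vsub (vsub (mulmv (mtr (P x0)) (q y)) (mulmv (mtr (P x0)) (q x0)))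
            (mulmv (mmul (mtr (P x0)) Q) (vsub y x0))))
      (mulTmv Py (vsub (q y) (q x0))).
  rewrite mulmv_madd /Py mulTmv_msub !mulTmv_sub -!mulmv_mtr.
  by apply: vext => i; rewrite /vadd /vsub; ring.
apply: Rle_trans (norm1_add _ _) _; apply: Rle_trans (Rplus_le_compat_r _ _ _ (norm1_add _ _)) _.
apply: Rle_trans (Rplus_le_compat_l _ _ _ (mulTmv_bound _ _)) _.
have Hn := norm1_ge0 (vsub y x0); have Hm := mnorm_ge0 Py.
suff : mnorm Py * norm1 (vsub (q y) (q x0)) <= eps / 3 * norm1 (vsub y x0) by lra.
apply: Rle_trans (Rmult_le_compat _ _ _ _ Hm (norm1_ge0 _) (Rlt_le _ _ B3) B4) _.
by right; field; lra.
Qed.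

Lemma cont_mat_rows (I J K : finType) (M : vec I -> mat J K) x :
  (forall j, cont_vec (fun y k => M y j k) x) -> cont_mat M x.
Proof.
move=> H eps Heps; have KJ := cardR1_gt0 J.
have He : 0 < eps / cardR1 J by apply: Rdiv_lt_0_compat.
apply: (near_mono (near_all (fun j => H j _ He))) => y Hy.
apply: (Rle_lt_trans _ (\big[Rplus/0]_(j : J) (eps / cardR1 J))).
  by apply: sumR_le => j; apply: Rlt_le; exact: Hy.
rewrite sumR_const; have := pos_INR #|J|; rewrite /cardR1 => Hp.
apply: (Rmult_lt_reg_r (INR #|J| + 1)); first lra.
by replace (INR #|J| * (eps / (INR #|J| + 1)) * (INR #|J| + 1)) with (INR #|J| * eps)
  by (field; lra); nra.
Qed.

Lemma cont_mat_comp (I J K L : finType) (P : vec J -> mat K L) (g : vec I -> vec J) x :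
  cont_mat P (g x) -> cont_vec g x -> cont_mat (fun y => P (g y)) x.
Proof.
move=> HP Hg eps He; have [d1 [Hd1 H1]] := HP eps He.
by apply: (near_mono (Hg _ Hd1)) => y /H1.
Qed.

Lemma cont_mat_mmul (I K J L : finType) (P : vec I -> mat K J) (Q : vec I -> mat J L) x :
  cont_mat P x -> cont_mat Q x -> cont_mat (fun y => mmul (P y) (Q y)) x.
Proof.
move=> HP HQ eps He.
have HmP := mnorm_ge0 (P x); have HmQ := mnorm_ge0 (Q x).
set c := mnorm (P x) + mnorm (Q x) + 1.
have Hc : 0 < c by rewrite /c; lra.
have He' : 0 < Rmin 1 (eps / (2 * c)) by apply: Rmin_glb_lt; [lra | apply: Rdiv_lt_0_compat; lra].
have Hm1 := Rmin_l 1 (eps / (2 * c)); have Hm2 := Rmin_r 1 (eps / (2 * c)).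
apply: (near_mono (near_and (HP _ He') (HQ _ He'))) => y [A1 A2].
have -> : msub (mmul (P y) (Q y)) (mmul (P x) (Q x)) =
  madd (mmul (msub (P y) (P x)) (Q y)) (mmul (P x) (msub (Q y) (Q x))).
  apply: mext => i j; rewrite /msub /madd /mmul -big_split /= -sumR_sub /=.
  by apply: eq_bigr => k _; ring.
apply: Rle_lt_trans (mnorm_add _ _) _.
apply: Rle_lt_trans (Rplus_le_compat _ _ _ _ (mnorm_mmul _ _) (mnorm_mmul _ _)) _.
have HQy : mnorm (Q y) <= mnorm (Q x) + 1.
  have -> : Q y = madd (msub (Q y) (Q x)) (Q x) by apply: mext => i j; rewrite /madd /msub; ring.
  apply: Rle_trans (mnorm_add _ _) _; lra.
have := mnorm_ge0 (msub (P y) (P x)); have := mnorm_ge0 (msub (Q y) (Q x)); have := mnorm_ge0 (Q y) => *.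
set d := Rmin 1 (eps / (2 * c)) in A1 A2 Hm1 Hm2 *.
have C1 : mnorm (msub (P y) (P x)) * mnorm (Q y) <= d * (mnorm (Q x) + 1).
  by apply: Rmult_le_compat; lra.
have C2 : mnorm (P x) * mnorm (msub (Q y) (Q x)) <= mnorm (P x) * d.
  by apply: Rmult_le_compat_l; lra.
have : d * c <= eps / 2.
  apply: (Rle_trans _ (eps / (2 * c) * c)); first by apply: Rmult_le_compat_r; lra.
  by right; field; lra.
have : d * c = d * (mnorm (Q x) + 1) + mnorm (P x) * d by rewrite /c; ring.
lra.
Qed.

Definition line_pt {I : finType} (b a : vec I) (s : R) : vec I := vadd b (vscale s a).

Lemma fderiv_along_line (I J : finType) (f : vec I -> vec J) M b a s j :
  is_fderiv f M (line_pt b a s) ->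
  derivable_pt_lim (fun s => f (line_pt b a s) j) s (mulmv M a j).
Proof.
move=> H eps Heps; have Ha := norm1_ge0 a.
have He : 0 < eps / 2 / (norm1 a + 1) by apply: Rdiv_lt_0_compat; lra.
have [d [Hd Hy]] := H _ He.
have Hd' : 0 < d / (norm1 a + 1) by apply: Rdiv_lt_0_compat; lra.
exists (mkposreal _ Hd') => h Hh0 /= Hh.
have Hhp : 0 < Rabs h by apply: Rabs_pos_lt.
have Hyz : vsub (line_pt b a (s + h)) (line_pt b a s) = vscale h a
  by apply: vext => i; rewrite /line_pt /vsub /vadd /vscale; ring.
have Hn : norm1 (vsub (line_pt b a (s + h)) (line_pt b a s)) < d.
  rewrite Hyz norm1_scale; have := Rmult_lt_compat_r (norm1 a + 1) _ _ ltac:(lra) Hh.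
  by replace (d / (norm1 a + 1) * (norm1 a + 1)) with d by (field; lra); nra.
have := Hy _ Hn; rewrite Hyz norm1_scale mulmv_scale => HE.
have := norm1_coord (vsub (vsub (f (line_pt b a (s + h))) (f (line_pt b a s)))
  (vscale h (mulmv M a))) j; move=> Hj; rewrite /vsub /vscale in HE Hj.
replace ((f (line_pt b a (s + h)) j - f (line_pt b a s) j) / h - mulmv M a j) with
  ((f (line_pt b a (s + h)) j - f (line_pt b a s) j - h * mulmv M a j) / h) by (field; lra).
rewrite /Rdiv Rabs_mult Rabs_inv; apply: (Rmult_lt_reg_r (Rabs h)) => //.
rewrite Rmult_assoc Rinv_l ?Rmult_1_r; last lra.
have Hdiv := @div_succ_le (norm1 a) (eps / 2) Ha ltac:(lra).
apply: (Rle_lt_trans _ (eps / 2 * Rabs h)); last nra.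
apply: Rle_trans (Rle_trans _ _ _ Hj HE) _; nra.
Qed.

Lemma mean_value_ineq (I J : finType) (f : vec I -> vec J) (M : vec I -> mat J I) A x0 r eps :
  (forall z, norm1 (vsub z x0) < r -> is_fderiv f (M z) z /\ mnorm (msub (M z) A) <= eps) ->
  forall a b, norm1 (vsub a x0) < r -> norm1 (vsub b x0) < r ->
  norm1 (vsub (vsub (f a) (f b)) (mulmv A (vsub a b))) <= INR #|J| * eps * norm1 (vsub a b).
Proof.
move=> H a b Ha Hb.
apply: (Rle_trans _ (\big[Rplus/0]_(j : J) (eps * norm1 (vsub a b)))); last by rewrite sumR_const; right; ring.
set c := eps * norm1 (vsub a b).
rewrite {1}/norm1.
apply: sumR_le => j.
pose g := fun y => vsub (f y) (mulmv A y).
have Hseg : forall s, 0 <= s <= 1 -> norm1 (vsub (line_pt b (vsub a b) s) x0) < r.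
  move=> s Hs.
  have -> : vsub (line_pt b (vsub a b) s) x0 = vadd (vscale (1 - s) (vsub b x0)) (vscale s (vsub a x0)).
    apply: vext => i; rewrite /line_pt /vsub /vadd /vscale; ring.
  apply: Rle_lt_trans (norm1_add _ _) _; rewrite !norm1_scale !Rabs_right; try lra.
  have := norm1_ge0 (vsub a x0); have := norm1_ge0 (vsub b x0) => *.
  have h1 : (1 - s) * norm1 (vsub b x0) <= (1 - s) * r by apply: Rmult_le_compat_l; lra.
  have h2 : s * norm1 (vsub a x0) <= s * r by apply: Rmult_le_compat_l; lra.
  case: (Req_dec s 0) => [->|Hs0].
  + lra.
  + have : s * norm1 (vsub a x0) < s * r by apply: Rmult_lt_compat_l; lra.
    lra.
have Hder : forall s, 0 <= s <= 1 ->
    derivable_pt_lim (fun s => g (line_pt b (vsub a b) s) j) s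
      (mulmv (msub (M (line_pt b (vsub a b) s)) A) (vsub a b) j).
  move=> s Hs; apply: fderiv_along_line; apply: fderiv_sub_lin; exact: (proj1 (H _ (Hseg s Hs))).
have [cc [Hcc Hcr]] := MVT_cor2 _ _ 0 1 Rlt_0_1 Hder.
have E1 : line_pt b (vsub a b) 1 = a by apply: vext => i; rewrite /line_pt /vadd /vscale /vsub; ring.
have E0 : line_pt b (vsub a b) 0 = b by apply: vext => i; rewrite /line_pt /vadd /vscale /vsub; ring.
rewrite E1 E0 in Hcc.
have -> : vsub (vsub (f a) (f b)) (mulmv A (vsub a b)) j = g a j - g b j.
  rewrite /g mulmv_sub /vsub; ring.
rewrite Hcc Rminus_0_r Rmult_1_r.
apply: Rle_trans (norm1_coord _ j) _.
apply: Rle_trans (mulmv_bound _ _) _.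
rewrite /c; apply: Rmult_le_compat_r; first exact: norm1_ge0.
apply: (proj2 (H _ (Hseg cc ltac:(lra)))).
Qed.

Section Schwarz.
Variables (I : finType) (f : vec I -> R) (G : vec I -> vec I) (H : mat I I) (x : vec I).
Hypothesis HG : forall y, is_fderiv (fun z (_ : unit) => f z) (fun _ j => G y j) y.
Hypothesis HH : is_fderiv G H x.

Definition second_diff (u v : vec I) (t : R) :=
  f (vadd x (vadd (vscale t u) (vscale t v))) - f (vadd x (vscale t u))
  - f (vadd x (vscale t v)) + f x.

Lemma second_diff_sym u v t : second_diff u v t = second_diff v u t.
Proof.
rewrite /second_diff.
have -> : vadd x (vadd (vscale t u) (vscale t v)) = vadd x (vadd (vscale t v) (vscale t u)).
  apply: vext => i; rewrite /vadd; ring.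
ring.
Qed.

Lemma derive_along_line z u s :
  derivable_pt_lim (fun s => f (line_pt z u s)) s (dot (G (line_pt z u s)) u).
Proof. exact: (fderiv_along_line tt (HG (line_pt z u s))). Qed.

Local Notation grad_rem p := (vsub (vsub (G p) (G x)) (mulmv H (vsub p x))).

Lemma second_diff_mvt u v t : 0 < t -> exists c, 0 <= c <= t /\
  second_diff u v t - t * t * dot (mulmv H v) u =
  t * (dot (grad_rem (vadd x (vadd (vscale c u) (vscale t v)))) u
       - dot (grad_rem (vadd x (vscale c u))) u).
Proof.
move=> Ht.
pose phi s := f (line_pt (vadd x (vscale t v)) u s) - f (line_pt x u s).
have Hder : forall s, 0 <= s <= t -> derivable_pt_lim phi s
    (dot (G (line_pt (vadd x (vscale t v)) u s)) u - dot (G (line_pt x u s)) u).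
  by move=> s _; apply: derivable_pt_lim_minus; exact: derive_along_line.
have [c [Hc Hcr]] := MVT_cor2 _ _ 0 t Ht Hder.
exists c; split; first lra.
have -> : second_diff u v t = phi t - phi 0.
  rewrite /second_diff /phi /line_pt.
  have -> : vadd (vadd x (vscale t v)) (vscale t u) = vadd x (vadd (vscale t u) (vscale t v))
    by apply: vext => i; rewrite /vadd; ring.
  have -> : vadd (vadd x (vscale t v)) (vscale 0 u) = vadd x (vscale t v)
    by apply: vext => i; rewrite /vadd /vscale; ring.
  have -> : vadd x (vscale 0 u) = x by apply: vext => i; rewrite /vadd /vscale; ring.
  ring.
rewrite Hc.
have -> : line_pt (vadd x (vscale t v)) u c = vadd x (vadd (vscale c u) (vscale t v))
  by apply: vext => i; rewrite /line_pt /vadd; ring.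
rewrite /line_pt !dot_subl !mulmv_sub !dot_subl !mulmv_add !mulmv_scale !dot_addl !dot_scalel.
ring.
Qed.

Lemma grad_rem_dot_le e p1 p2 u :
  norm1 (grad_rem p1) <= e * norm1 (vsub p1 x) -> norm1 (grad_rem p2) <= e * norm1 (vsub p2 x) ->
  Rabs (dot (grad_rem p1) u - dot (grad_rem p2) u) <=
    e * (norm1 (vsub p1 x) + norm1 (vsub p2 x)) * norm1 u.
Proof.
move=> R1 R2; rewrite /Rminus; apply: Rle_trans (Rabs_triang _ _) _; rewrite Rabs_Ropp.
have := dot_bound (grad_rem p1) u; have := dot_bound (grad_rem p2) u.
have := Rmult_le_compat_r _ _ _ (norm1_ge0 u) R1; have := Rmult_le_compat_r _ _ _ (norm1_ge0 u) R2.
lra.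
Qed.

Lemma second_diff_approx u v eps : 0 < eps -> exists delta, 0 < delta /\
  forall t, 0 < t < delta ->
    Rabs (second_diff u v t - t * t * dot (mulmv H v) u) <= eps * (t * t).
Proof.
move=> Heps; have Hu := norm1_ge0 u; have Hv := norm1_ge0 v.
set S := norm1 u + norm1 v; set K := S * norm1 u.
have HS : 0 <= S by rewrite /S; lra.
have HK : 0 <= K by rewrite /K; nra.
have He : 0 < eps / (2 * (K + 1)) by apply: Rdiv_lt_0_compat; lra.
have [d [Hd Hr]] := HH He.
exists (d / (S + 1)); split=> [|t [Ht Htd]]; first by apply: Rdiv_lt_0_compat; lra.
have HtS : t * S < d.
  have : t * (S + 1) < d.
    have := Rmult_lt_compat_r (S + 1) _ _ ltac:(lra) Htd.
    by replace (d / (S + 1) * (S + 1)) with d by (field; lra).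
  nra.
have [c [Hc ->]] := second_diff_mvt u v Ht.
set p1 := vadd x (vadd (vscale c u) (vscale t v)); set p2 := vadd x (vscale c u).
have Hcu : c * norm1 u <= t * norm1 u by apply: Rmult_le_compat_r; lra.
have Htv : 0 <= t * norm1 v by apply: Rmult_le_pos; lra.
have Hp1 : norm1 (vsub p1 x) <= t * S.
  have -> : vsub p1 x = vadd (vscale c u) (vscale t v)
    by apply: vext => i; rewrite /p1 /vsub /vadd; ring.
  apply: Rle_trans (norm1_add _ _) _; rewrite !norm1_scale !Rabs_right /S; lra.
have Hp2 : norm1 (vsub p2 x) <= t * S.
  have -> : vsub p2 x = vscale c u by apply: vext => i; rewrite /p2 /vsub /vadd; ring.
  rewrite norm1_scale Rabs_right /S; lra.
have := grad_rem_dot_le u (Hr p1 (Rle_lt_trans _ _ _ Hp1 HtS)) (Hr p2 (Rle_lt_trans _ _ _ Hp2 HtS)).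
move=> Hrem; rewrite Rabs_mult Rabs_right; last lra.
have : eps / (2 * (K + 1)) * (norm1 (vsub p1 x) + norm1 (vsub p2 x)) * norm1 u <=
    t * (K * (eps / (K + 1))).
  apply: (Rle_trans _ (eps / (2 * (K + 1)) * (2 * (t * S)) * norm1 u)).
    by apply: Rmult_le_compat_r => //; apply: Rmult_le_compat_l; lra.
  by right; rewrite {2}/K; field; lra.
move=> Hb.
apply: Rle_trans (Rmult_le_compat_l _ _ _ (Rlt_le _ _ Ht) (Rle_trans _ _ _ Hrem Hb)) _.
rewrite -Rmult_assoc [eps * _]Rmult_comm; apply: Rmult_le_compat_l; first nra.
exact: div_succ_le HK (Rlt_le _ _ Heps).
Qed.

Lemma hessian_sym_dot u v : dot (mulmv H v) u = dot (mulmv H u) v.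
Proof.
set a := dot (mulmv H v) u; set b := dot (mulmv H u) v.
suff Hab : forall e, 0 < e -> Rabs (a - b) <= e.
  apply: Rle_antisym; apply: Rle_plus_epsilon => e He; have := Hab e He;
    have := Rle_abs (a - b); have := Rle_abs (b - a); have := Rabs_minus_sym a b; lra.
move=> e He.
have [d1 [Hd1 H1]] := @second_diff_approx u v (e / 2) ltac:(lra).
have [d2 [Hd2 H2]] := @second_diff_approx v u (e / 2) ltac:(lra).
have Hm : 0 < Rmin d1 d2 by apply: Rmin_glb_lt.
have := Rmin_l d1 d2; have := Rmin_r d1 d2; set t := Rmin d1 d2 / 2 => Hm2 Hm1.
have Ht : 0 < t by rewrite /t; lra.
have Ht1 : t < d1 by rewrite /t; lra.
have Ht2 : t < d2 by rewrite /t; lra.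
have A1 := H1 t (conj Ht Ht1); have A2 := H2 t (conj Ht Ht2).
rewrite second_diff_sym -/b in A2; rewrite -/a in A1.
have Htt : 0 < t * t by apply: Rmult_lt_0_compat.
have : Rabs (t * t * (a - b)) <= e * (t * t).
  replace (t * t * (a - b)) with
    ((second_diff u v t - t * t * b) + - (second_diff u v t - t * t * a)) by ring.
  apply: Rle_trans (Rabs_triang _ _) _; rewrite Rabs_Ropp; lra.
rewrite Rabs_mult Rabs_right; last lra.
move=> Hle; apply: (Rmult_le_reg_l (t * t)) => //; lra.
Qed.

Lemma hessian_sym i j : H i j = H j i.
Proof.
have := hessian_sym_dot (unitv i) (unitv j).
rewrite !dot_unitv !mulmv_unitv //.
Qed.

End Schwarz.

Definition eventually (P : nat -> Prop) := exists K, forall k, (K <= k)%nat -> P k.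

Definition cvg1 {I : finType} (u : nat -> vec I) (l : vec I) : Prop :=
  forall eps, 0 < eps -> eventually (fun k => norm1 (vsub (u k) l) < eps).

Lemma eventually_and P Q : eventually P -> eventually Q -> eventually (fun k => P k /\ Q k).
Proof.
move=> [K1 H1] [K2 H2]; exists (maxn K1 K2) => k Hk; split.
- apply: H1; exact: leq_trans (leq_maxl _ _) Hk.
- apply: H2; exact: leq_trans (leq_maxr _ _) Hk.
Qed.

Lemma eventually_mono (P Q : nat -> Prop) : eventually P -> (forall k, P k -> Q k) -> eventually Q.
Proof. move=> [K HK] H; exists K => k Hk; exact: H (HK k Hk). Qed.

Lemma eventually_always (P : nat -> Prop) : (forall k, P k) -> eventually P.
Proof. move=> H; exists 0%nat => k _; exact: H. Qed.

Lemma eventually_all (K : finType) (P : K -> nat -> Prop) :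
  (forall k, eventually (P k)) -> eventually (fun n => forall k, P k n).
Proof.
move=> H.
suff [N HN] : eventually (fun n => forall k, k \in enum K -> P k n).
  by exists N => n /HN Hn k; apply: Hn; rewrite mem_enum.
elim: (enum K) => [|a s IH]; first by exists 0%nat => n _ k; rewrite in_nil.
apply: (eventually_mono (eventually_and (H a) IH)) => n [Ha Hs] k.
by rewrite inE => /orP [/eqP -> //|]; exact: Hs.
Qed.

Lemma Un_cv0_eventually (t : nat -> R) : Un_cv t 0 -> forall eps, 0 < eps -> eventually (fun k => Rabs (t k) < eps).
Proof.
move=> H eps He; have [N HN] := H eps He; exists N => k /leP Hk.
have := HN k Hk; rewrite /Rdist Rminus_0_r //.
Qed.
Arguments Un_cv0_eventually [t] H eps Heps.

Section Cvg1.
Variable I : finType.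
Implicit Types u v : nat -> vec I.

Lemma cvg1_bounded u l : cvg1 u l -> eventually (fun k => norm1 (u k) <= norm1 l + 1).
Proof.
move=> H; apply: (eventually_mono (H 1 Rlt_0_1)) => k Hk.
have -> : u k = vadd (vsub (u k) l) l by apply: vext => i; rewrite /vadd /vsub; ring.
apply: Rle_trans (norm1_add _ _) _; lra.
Qed.

Lemma cvg1_le u l : (forall eps, 0 < eps -> eventually (fun k => norm1 (vsub (u k) l) <= eps)) -> cvg1 u l.
Proof.
move=> H eps He; have [N HN] := H (eps / 2) ltac:(lra); exists N => k Hk.
have := HN k Hk; lra.
Qed.

Lemma cvg1_ext u v l : eventually (fun k => u k = v k) -> cvg1 u l -> cvg1 v l.
Proof.
move=> E H; apply: cvg1_le => eps He.
apply: (eventually_mono (eventually_and E (H eps He))) => k [-> Hk]; lra.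
Qed.

Lemma cvg1_const (l : vec I) : cvg1 (fun _ => l) l.
Proof.
move=> eps He; exists 0%nat => k _.
have -> : vsub l l = vzero by apply: vext => i; rewrite /vsub /vzero; ring.
by rewrite norm1_zero.
Qed.

Lemma cvg1_add u v a b : cvg1 u a -> cvg1 v b -> cvg1 (fun k => vadd (u k) (v k)) (vadd a b).
Proof.
move=> Hu Hv; apply: cvg1_le => eps He.
apply: (eventually_mono (eventually_and (Hu (eps/2) ltac:(lra)) (Hv (eps/2) ltac:(lra)))) => k [H1 H2].
have -> : vsub (vadd (u k) (v k)) (vadd a b) = vadd (vsub (u k) a) (vsub (v k) b).
  apply: vext => i; rewrite /vadd /vsub; ring.
apply: Rle_trans (norm1_add _ _) _; lra.
Qed.

Lemma cvg1_sub u v a b : cvg1 u a -> cvg1 v b -> cvg1 (fun k => vsub (u k) (v k)) (vsub a b).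
Proof.
move=> Hu Hv; apply: cvg1_le => eps He.
apply: (eventually_mono (eventually_and (Hu (eps/2) ltac:(lra)) (Hv (eps/2) ltac:(lra)))) => k [H1 H2].
have -> : vsub (vsub (u k) (v k)) (vsub a b) = vsub (vsub (u k) a) (vsub (v k) b).
  apply: vext => i; rewrite /vadd /vsub; ring.
apply: Rle_trans (norm1_sub _ _) _; lra.
Qed.

Lemma cvg1_to0 u : (forall eps, 0 < eps -> eventually (fun k => norm1 (u k) <= eps)) -> cvg1 u vzero.
Proof.
move=> H; apply: cvg1_le => eps He; apply: (eventually_mono (H eps He)) => k.
have -> : vsub (u k) vzero = u k by apply: vext => i; rewrite /vsub /vzero; ring.
done.
Qed.

Lemma cvg1_unique u a b : cvg1 u a -> cvg1 u b -> a = b.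
Proof.
move=> Ha Hb.
suff : vsub a b = vzero.
  move=> E; apply: vext => i; have := f_equal (fun w => w i) E; rewrite /vsub /vzero; lra.
apply: norm1_le_eq0 => eps He.
have [K HK] := eventually_and (Ha (eps/2) ltac:(lra)) (Hb (eps/2) ltac:(lra)).
have [H1 H2] := HK K (leqnn K).
apply: Rle_trans (norm1_triangle _ (u K) _) _; rewrite norm1_subC in H1; lra.
Qed.

Lemma cvg1_norm_le u l a B :
  cvg1 u l -> eventually (fun k => norm1 (vsub (u k) a) <= B) -> norm1 (vsub l a) <= B.
Proof.
move=> Hu Hb; apply: Rle_plus_epsilon => eps He.
have [K HK] := eventually_and (Hu eps He) Hb; have [H1 H2] := HK K (leqnn K).
apply: Rle_trans (norm1_triangle _ (u K) _) _; rewrite norm1_subC in H1; lra.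
Qed.

End Cvg1.

Lemma cvg1_mulmv_seq (I J : finType) (Mk : nat -> mat J I) (A : mat J I) (u : nat -> vec I) l :
  (forall eps, 0 < eps -> eventually (fun k => mnorm (msub (Mk k) A) <= eps)) ->
  cvg1 u l -> cvg1 (fun k => mulmv (Mk k) (u k)) (mulmv A l).
Proof.
move=> HM Hu; apply: cvg1_le => eps He.
have Hl := norm1_ge0 l; have Hm := mnorm_ge0 A.
set e1 := eps / (2 * (norm1 l + 1)).
have He1 : 0 < e1 by apply: Rdiv_lt_0_compat; lra.
set e2 := eps / (2 * (mnorm A + 1)).
have He2 : 0 < e2 by apply: Rdiv_lt_0_compat; lra.
have E := eventually_and (eventually_and (HM e1 He1) (cvg1_bounded Hu)) (Hu e2 He2).
apply: (eventually_mono E) => k [[H1 H2] H3].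
have -> : vsub (mulmv (Mk k) (u k)) (mulmv A l) =
  vadd (mulmv (msub (Mk k) A) (u k)) (mulmv A (vsub (u k) l)).
  rewrite mulmv_msub mulmv_sub; apply: vext => i; rewrite /vadd /vsub; ring.
apply: Rle_trans (norm1_add _ _) _.
have B1 := mulmv_bound (msub (Mk k) A) (u k).
have B2 := mulmv_bound A (vsub (u k) l).
have := norm1_ge0 (u k); have := mnorm_ge0 (msub (Mk k) A); have := norm1_ge0 (vsub (u k) l) => *.
have C1 : mnorm (msub (Mk k) A) * norm1 (u k) <= e1 * (norm1 l + 1).
  apply: Rmult_le_compat; lra.
have C2 : mnorm A * norm1 (vsub (u k) l) <= (mnorm A + 1) * e2.
  apply: Rmult_le_compat; lra.
have : e1 * (norm1 l + 1) = eps / 2 by rewrite /e1; field; lra.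
have : (mnorm A + 1) * e2 = eps / 2 by rewrite /e2; field; lra.
lra.
Qed.

Lemma cvg1_mulmv (I J : finType) (A : mat J I) (u : nat -> vec I) l :
  cvg1 u l -> cvg1 (fun k => mulmv A (u k)) (mulmv A l).
Proof.
apply: cvg1_mulmv_seq => eps He; apply: eventually_always => k.
have -> : msub A A = fun _ _ => 0 by apply: mext => i j; rewrite /msub; ring.
rewrite /mnorm big1 => [|i _]; last by rewrite big1 // => j _; rewrite Rabs_R0.
lra.
Qed.

Lemma scale_cvg1_small (I : finType) (t : nat -> R) (u : nat -> vec I) l :
  Un_cv t 0 -> cvg1 u l -> forall eps, 0 < eps -> eventually (fun k => norm1 (vscale (t k) (u k)) < eps).
Proof.
move=> Ht Hu eps He; have Hl := norm1_ge0 l.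
have He' : 0 < eps / (norm1 l + 1) by apply: Rdiv_lt_0_compat; lra.
apply: (eventually_mono (eventually_and (Un_cv0_eventually Ht _ He') (cvg1_bounded Hu))).
move=> k [H1 H2]; rewrite norm1_scale.
have := Rabs_pos (t k); have := norm1_ge0 (u k) => *.
apply: (Rle_lt_trans _ (Rabs (t k) * (norm1 l + 1))); first by apply: Rmult_le_compat_l; lra.
have := Rmult_lt_compat_r (norm1 l + 1) _ _ ltac:(lra) H1.
by replace (eps / (norm1 l + 1) * (norm1 l + 1)) with eps by (field; lra).
Qed.
Arguments scale_cvg1_small [I t u l] Ht Hu eps Heps.

Lemma diff_quotient_cvg (I J : finType) (f : vec I -> vec J) L z (t : nat -> R) (u : nat -> vec I) l :
  is_fderiv f L z -> (forall k, 0 < t k) -> Un_cv t 0 -> cvg1 u l ->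
  cvg1 (fun k => vscale (/ t k) (vsub (f (vadd z (vscale (t k) (u k)))) (f z))) (mulmv L l).
Proof.
move=> HD Ht0 Ht Hu.
have Hl := norm1_ge0 l.
suff H : cvg1 (fun k => vsub (vscale (/ t k) (vsub (f (vadd z (vscale (t k) (u k)))) (f z))) (mulmv L (u k))) vzero.
  have := cvg1_add H (cvg1_mulmv L Hu).
  have -> : vadd vzero (mulmv L l) = mulmv L l by apply: vext => i; rewrite /vadd /vzero; ring.
  apply: cvg1_ext; apply: eventually_always => k; apply: vext => i; rewrite /vadd /vsub; ring.
apply: cvg1_to0 => eps He.
have [d [Hd Hy]] := HD (eps / (norm1 l + 1)) ltac:(apply: Rdiv_lt_0_compat; lra).
apply: (eventually_mono (eventually_and (scale_cvg1_small Ht Hu _ Hd) (cvg1_bounded Hu))) => k [H1 H2].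
set y := vadd z (vscale (t k) (u k)).
have Hyz : vsub y z = vscale (t k) (u k) by apply: vext => i; rewrite /y /vsub /vadd; ring.
have := Hy y; rewrite Hyz => /(_ H1) Hb.
have Htk := Ht0 k.
have -> : vsub (vscale (/ t k) (vsub (f y) (f z))) (mulmv L (u k)) =
  vscale (/ t k) (vsub (vsub (f y) (f z)) (mulmv L (vscale (t k) (u k)))).
  rewrite mulmv_scale; apply: vext => i; rewrite /vsub /vscale; field; lra.
rewrite norm1_scale norm1_scale in Hb *. rewrite Rabs_right in Hb; last lra.
rewrite Rabs_right; last by apply: Rle_ge; apply: Rlt_le; apply: Rinv_0_lt_compat.
apply: (Rmult_le_reg_l (t k)) => //.
rewrite -Rmult_assoc Rinv_r; last lra.
rewrite Rmult_1_l; apply: Rle_trans Hb _.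
have := norm1_ge0 (u k) => H0.
replace (eps / (norm1 l + 1) * (t k * norm1 (u k))) with (t k * (eps * (norm1 (u k) / (norm1 l + 1)))) by (field; lra).
apply: Rmult_le_compat_l; first lra.
rewrite -[X in _ <= X]Rmult_1_r; apply: Rmult_le_compat_l; first lra.
apply: (Rmult_le_reg_r (norm1 l + 1)); first lra.
replace (norm1 (u k) / (norm1 l + 1) * (norm1 l + 1)) with (norm1 (u k)) by (field; lra). lra.
Qed.

Lemma half_pow_gt0 k : 0 < (/ 2) ^ k.
Proof. apply: pow_lt; lra. Qed.

Lemma half_powS k : (/ 2) ^ k.+1 = (/ 2) ^ k / 2.
Proof. rewrite /= /Rdiv; ring. Qed.

Lemma half_pow_small eps : 0 < eps -> exists N, forall k, (N <= k)%nat -> (/ 2) ^ k < eps.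
Proof.
move=> He; have [N HN] := pow_lt_1_zero (/ 2) ltac:(rewrite Rabs_right; lra) eps He.
exists N => k /leP Hk; have := HN k Hk; rewrite Rabs_right //; apply: Rle_ge; apply: Rlt_le; exact: half_pow_gt0.
Qed.

Lemma norm1_lt_coord (I : finType) (u : vec I) eps :
  0 < eps -> (forall i, Rabs (u i) < eps / cardR1 I) -> norm1 u < eps.
Proof.
move=> He Hu; have := pos_INR #|I|; rewrite /cardR1 => Hp.
apply: (Rle_lt_trans _ (\big[Rplus/0]_(i : I) (eps / (INR #|I| + 1)))).
  by apply: sumR_le => i; apply: Rlt_le; exact: Hu.
rewrite sumR_const; apply: (Rmult_lt_reg_r (INR #|I| + 1)); first lra.
replace (INR #|I| * (eps / (INR #|I| + 1)) * (INR #|I| + 1)) with (INR #|I| * eps)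
  by (field; lra); nra.
Qed.

(* Newton iteration with a fixed right inverse R0 of the model derivative A;
   the contraction factor 1/2 is built into the linearization hypothesis. *)
Section Newton.
Variables (I J : finType) (F : vec I -> vec J) (A : mat J I) (R0 : mat I J) (x0 : vec I).
Variables r c : R.
Hypothesis HR0 : forall y, mulmv A (mulmv R0 y) = y.
Hypothesis Hc : 0 < c.
Hypothesis HcR : forall y, norm1 (mulmv R0 y) <= c * norm1 y.
Hypothesis Hlin : forall a b, norm1 (vsub a x0) < r -> norm1 (vsub b x0) < r ->
  norm1 (vsub (vsub (F a) (F b)) (mulmv A (vsub a b))) <= norm1 (vsub a b) / (2 * c).

Lemma lipschitz_near a b : norm1 (vsub a x0) < r -> norm1 (vsub b x0) < r ->
  norm1 (vsub (F a) (F b)) <= (mnorm A + / (2 * c)) * norm1 (vsub a b).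
Proof.
move=> Ha Hb.
have -> : vsub (F a) (F b) =
    vadd (vsub (vsub (F a) (F b)) (mulmv A (vsub a b))) (mulmv A (vsub a b)).
  by apply: vext => i; rewrite /vadd /vsub; ring.
apply: Rle_trans (norm1_add _ _) _.
have := Hlin Ha Hb; have := mulmv_bound A (vsub a b); rewrite /Rdiv => *; lra.
Qed.

Variables (x : vec I) (y : vec J).
Hypothesis Hx : norm1 (vsub x x0) < r / 2.
Hypothesis Hy : 2 * c * norm1 (vsub (F x) y) < r / 2.

Local Notation e := (norm1 (vsub (F x) y)).

Fixpoint newton_seq (k : nat) : vec I :=
  if k is k'.+1 then vsub (newton_seq k') (mulmv R0 (vsub (F (newton_seq k')) y)) else x.

Lemma newton_step k :
  norm1 (vsub (newton_seq k.+1) (newton_seq k)) <= c * norm1 (vsub (F (newton_seq k)) y).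
Proof.
have -> : vsub (newton_seq k.+1) (newton_seq k) = vopp (mulmv R0 (vsub (F (newton_seq k)) y))
  by apply: vext => i; rewrite /= /vsub /vopp; ring.
by rewrite norm1_opp.
Qed.

Lemma newton_residual k :
  vsub (F (newton_seq k.+1)) y =
  vsub (vsub (F (newton_seq k.+1)) (F (newton_seq k)))
       (mulmv A (vsub (newton_seq k.+1) (newton_seq k))).
Proof.
have -> : vsub (newton_seq k.+1) (newton_seq k) = vopp (mulmv R0 (vsub (F (newton_seq k)) y))
  by apply: vext => i; rewrite /= /vsub /vopp; ring.
by rewrite mulmv_opp HR0; apply: vext => i; rewrite /vsub /vopp; ring.
Qed.

Lemma newton_ball z : norm1 (vsub z x) <= 2 * c * e -> norm1 (vsub z x0) < r.
Proof. move=> Hz; apply: Rle_lt_trans (norm1_triangle _ x _) _; lra. Qed.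

Lemma newton_seq_bounds k : norm1 (vsub (F (newton_seq k)) y) <= e * (/ 2) ^ k /\
  norm1 (vsub (newton_seq k) x) <= 2 * c * e * (1 - (/ 2) ^ k).
Proof.
have He := norm1_ge0 (vsub (F x) y); have Hce : 0 <= c * e by apply: Rmult_le_pos; lra.
elim: k => [|k [IH1 IH2]].
  have -> : vsub x x = vzero by apply: vext => i; rewrite /vsub /vzero; ring.
  by rewrite /= norm1_zero; lra.
have Hh := half_pow_gt0 k.
have Hstep : norm1 (vsub (newton_seq k.+1) (newton_seq k)) <= c * (e * (/ 2) ^ k).
  by apply: Rle_trans (newton_step k) _; apply: Rmult_le_compat_l; lra.
have Hmono : forall j, 2 * c * e * (1 - (/ 2) ^ j) <= 2 * c * e.
  by move=> j; have := half_pow_gt0 j; nra.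
have H2 : norm1 (vsub (newton_seq k.+1) x) <= 2 * c * e * (1 - (/ 2) ^ k.+1).
  apply: Rle_trans (norm1_triangle _ (newton_seq k) _) _; rewrite half_powS; lra.
split=> //; rewrite newton_residual.
apply: Rle_trans (Hlin (newton_ball (Rle_trans _ _ _ H2 (Hmono _)))
  (newton_ball (Rle_trans _ _ _ IH2 (Hmono _)))) _.
rewrite half_powS; apply: (Rmult_le_reg_l (2 * c)); first lra.
replace (2 * c * (norm1 (vsub (newton_seq k.+1) (newton_seq k)) / (2 * c)))
  with (norm1 (vsub (newton_seq k.+1) (newton_seq k))) by (field; lra).
by replace (2 * c * (e * ((/ 2) ^ k / 2))) with (c * (e * (/ 2) ^ k)) by field.
Qed.

Lemma newton_seq_near k : norm1 (vsub (newton_seq k) x) <= 2 * c * e.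
Proof.
have [_ Hk] := newton_seq_bounds k; have := half_pow_gt0 k.
have : 0 <= c * norm1 (vsub (F x) y) by apply: Rmult_le_pos; [lra | exact: norm1_ge0].
nra.
Qed.

Lemma newton_seq_dist k m : (k <= m)%nat ->
  norm1 (vsub (newton_seq m) (newton_seq k)) <= 2 * c * e * (/ 2) ^ k.
Proof.
have He := norm1_ge0 (vsub (F x) y).
suff Hj : forall j, norm1 (vsub (newton_seq (k + j)) (newton_seq k)) <=
    2 * c * e * ((/ 2) ^ k - (/ 2) ^ (k + j)).
  move=> /subnKC <-; apply: Rle_trans (Hj _) _.
  have := half_pow_gt0 (k + (m - k)); have : 0 <= c * e by apply: Rmult_le_pos; lra.
  nra.
elim=> [|j IH].
  rewrite addn0; have -> : vsub (newton_seq k) (newton_seq k) = vzero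
    by apply: vext => i; rewrite /vsub /vzero; ring.
  by rewrite norm1_zero; lra.
rewrite addnS; have [H1 _] := newton_seq_bounds (k + j).
have Hstep : norm1 (vsub (newton_seq (k + j).+1) (newton_seq (k + j))) <= c * (e * (/ 2) ^ (k + j)).
  by apply: Rle_trans (newton_step _) _; apply: Rmult_le_compat_l; lra.
apply: Rle_trans (norm1_triangle _ (newton_seq (k + j)) _) _; rewrite half_powS; lra.
Qed.

Lemma newton_seq_coord_cauchy i : Cauchy_crit (fun k => newton_seq k i).
Proof.
move=> eps Heps.
have H0 : 0 <= 2 * c * e by apply: Rmult_le_pos; [lra | exact: norm1_ge0].
have [N HN] := @half_pow_small (eps / (2 * c * e + 1)) ltac:(apply: Rdiv_lt_0_compat; lra).
suff Hb : forall k m, (N <= k)%nat -> (k <= m)%nat -> Rabs (newton_seq m i - newton_seq k i) < eps.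
  exists N => n m /leP Hn /leP Hm; rewrite /Rdist.
  by case: (leqP n m) => Hnm; [rewrite Rabs_minus_sym; exact: Hb | exact: Hb Hm (ltnW Hnm)].
move=> k m Hk Hkm.
apply: Rle_lt_trans (norm1_coord (vsub (newton_seq m) (newton_seq k)) i) _.
apply: Rle_lt_trans (newton_seq_dist Hkm) _.
have := HN k Hk; have := half_pow_gt0 k => Hh0 Hh.
apply: (Rle_lt_trans _ ((2 * c * e + 1) * (/ 2) ^ k)); first by apply: Rmult_le_compat_r; lra.
replace eps with ((2 * c * e + 1) * (eps / (2 * c * e + 1))) by (field; lra).
apply: Rmult_lt_compat_l; lra.
Qed.

Definition newton_lim : vec I :=
  fun i => proj1_sig (R_complete _ (newton_seq_coord_cauchy i)).

Lemma newton_seq_cvg : cvg1 newton_seq newton_lim.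
Proof.
move=> eps He; have He' : 0 < eps / cardR1 I by apply: Rdiv_lt_0_compat; [|exact: cardR1_gt0].
suff [N HN] : eventually (fun k => forall i, Rabs (newton_seq k i - newton_lim i) < eps / cardR1 I).
  by exists N => k /HN Hk; apply: norm1_lt_coord.
apply: eventually_all => i.
have [N HN] := proj2_sig (R_complete _ (newton_seq_coord_cauchy i)) _ He'.
by exists N => k /leP /HN.
Qed.

Lemma newton_solution : exists x', F x' = y /\ norm1 (vsub x' x) <= 2 * c * e.
Proof.
have Hcv := newton_seq_cvg.
have Hd : norm1 (vsub newton_lim x) <= 2 * c * e.
  by apply: (cvg1_norm_le Hcv); apply: eventually_always => k; exact: newton_seq_near.
exists newton_lim; split=> //.
have HL : 0 < mnorm A + / (2 * c) + 1.
  by have := mnorm_ge0 A; have := Rinv_0_lt_compat (2 * c) ltac:(lra); lra.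
have HL' : mnorm A + / (2 * c) <= mnorm A + / (2 * c) + 1 by lra.
move: HL HL'; set L := mnorm A + / (2 * c) + 1 => HL HL'.
apply: (cvg1_unique (u := fun k => F (newton_seq k))).
- apply: cvg1_le => eps He.
  have He' : 0 < eps / L by apply: Rdiv_lt_0_compat.
  apply: (eventually_mono (Hcv _ He')) => k Hk.
  apply: Rle_trans (lipschitz_near (newton_ball (newton_seq_near k)) (newton_ball Hd)) _.
  apply: Rle_trans (_ : L * norm1 (vsub (newton_seq k) newton_lim) <= _).
    by apply: Rmult_le_compat_r; [exact: norm1_ge0 | lra].
  replace eps with (L * (eps / L)) by (field; lra).
  by apply: Rmult_le_compat_l; lra.
- apply: cvg1_le => eps He.
  have He' : 0 < eps / (e + 1) by apply: Rdiv_lt_0_compat; have := norm1_ge0 (vsub (F x) y); lra.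
  have [N HN] := half_pow_small He'; exists N => k /HN Hk.
  have [Hb _] := newton_seq_bounds k; apply: Rle_trans Hb _.
  have := norm1_ge0 (vsub (F x) y); have := half_pow_gt0 k => *.
  apply: (Rle_trans _ ((e + 1) * (/ 2) ^ k)); first by apply: Rmult_le_compat_r; lra.
  replace eps with ((e + 1) * (eps / (e + 1))) by (field; lra).
  by apply: Rmult_le_compat_l; lra.
Qed.

End Newton.

Lemma rinv_perturb (I J : finType) (A M : mat J I) (R0 : mat I J) c :
  (forall y, mulmv A (mulmv R0 y) = y) -> 0 < c -> (forall y, norm1 (mulmv R0 y) <= c * norm1 y) ->
  mnorm (msub M A) <= / (2 * c) ->
  exists R : mat I J, forall y, mulmv M (mulmv R y) = y.
Proof.
move=> HR0 Hc HcR HM; apply: surj_rinv => y.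
have Hy := norm1_ge0 y; have Hcy : 0 <= c * norm1 y by apply: Rmult_le_pos; lra.
have Hlin : forall a b, norm1 (vsub a vzero) < 4 * c * norm1 y + 4 ->
    norm1 (vsub b vzero) < 4 * c * norm1 y + 4 ->
    norm1 (vsub (vsub (mulmv M a) (mulmv M b)) (mulmv A (vsub a b))) <= norm1 (vsub a b) / (2 * c).
  move=> a b _ _.
  have -> : vsub (vsub (mulmv M a) (mulmv M b)) (mulmv A (vsub a b)) = mulmv (msub M A) (vsub a b)
    by rewrite mulmv_msub !mulmv_sub; apply: vext => i; rewrite /vsub; ring.
  apply: Rle_trans (mulmv_bound _ _) _.
  by rewrite /Rdiv Rmult_comm; apply: Rmult_le_compat_l => //; exact: norm1_ge0.
have Hx : norm1 (vsub (@vzero I) vzero) < (4 * c * norm1 y + 4) / 2.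
  have -> : vsub (@vzero I) vzero = vzero by apply: vext => i; rewrite /vsub /vzero; ring.
  by rewrite norm1_zero; lra.
have Hyy : 2 * c * norm1 (vsub (mulmv M vzero) y) < (4 * c * norm1 y + 4) / 2.
  have -> : vsub (mulmv M vzero) y = vopp y
    by rewrite mulmv_zero; apply: vext => i; rewrite /vsub /vzero /vopp; ring.
  by rewrite norm1_opp; lra.
by have [x' [Hx' _]] := newton_solution HR0 Hc HcR Hlin Hx Hyy; exists x'.
Qed.

Lemma seq_cv_cvg1 (I : finType) (u : nat -> vec I) l : seq_cv u l <-> cvg1 u l.
Proof.
have KIp := cardR1_gt0 I.
split=> H eps Heps.
- have [N HN] := H (eps / cardR1 I) ltac:(apply: Rdiv_lt_0_compat; lra).
  exists N => k Hk; have := HN k Hk => Hv.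
  apply: Rle_lt_trans (norm1_le_vnorm _) _.
  have : cardR1 I * vnorm (vsub (u k) l) < cardR1 I * (eps / cardR1 I) by apply: Rmult_lt_compat_l.
  replace (cardR1 I * (eps / cardR1 I)) with eps by (field; lra). lra.
- have [N HN] := H eps Heps. exists N => k Hk.
  exact: Rle_lt_trans (vnorm_le_norm1 _) (HN k Hk).
Qed.

Definition tangent_cone_ev {I : finType} (S : vec I -> Prop) (a w : vec I) : Prop :=
  exists (t : nat -> R) (wk : nat -> vec I),
    (forall k, 0 < t k) /\ Un_cv t 0 /\ cvg1 wk w /\
    eventually (fun k => S (vadd a (vscale (t k) (wk k)))).

Lemma tangent_cone_evP (I : finType) (S : vec I -> Prop) a w : tangent_cone S a w <-> tangent_cone_ev S a w.
Proof.
split.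
- move=> [t [wk [H1 [H2 [H3 H4]]]]]; exists t, wk; split=> //; split=> //; split.
  + by apply/seq_cv_cvg1.
  + exact: eventually_always.
- move=> [t [wk [H1 [H2 [H3 [K H4]]]]]].
  exists (fun k => t (k + K)%nat), (fun k => wk (k + K)%nat); split; first by move=> k.
  split.
    move=> eps He; have [N HN] := H2 eps He; exists N => n Hn; apply: HN.
    apply/leP; apply: leq_trans (leq_addr K n); exact/leP.
  split.
    apply/seq_cv_cvg1; move=> eps He; have [N HN] := H3 eps He; exists N => n Hn; apply: HN.
    exact: leq_trans Hn (leq_addr K n).
  move=> k; apply: H4; exact: leq_addl.
Qed.

Lemma tangent_cone0 (I : finType) (S : vec I -> Prop) a : S a -> tangent_cone S a vzero.
Proof.
move=> Ha; apply/tangent_cone_evP.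
exists (fun k => (/ 2) ^ k), (fun _ => vzero); split; first by move=> k; exact: half_pow_gt0.
split.
  move=> eps He; have [N HN] := half_pow_small He; exists N => k /leP Hk.
  rewrite /Rdist Rminus_0_r Rabs_right; last by apply: Rle_ge; apply: Rlt_le; exact: half_pow_gt0.
  exact: HN.
split; first exact: cvg1_const.
apply: eventually_always => k.
have -> : vadd a (vscale ((/ 2) ^ k) vzero) = a by apply: vext => i; rewrite /vadd /vscale /vzero; ring.
done.
Qed.

Definition graph_tangent {I J : finType} (S : vec I -> vec J -> Prop) (a : vec I) (b : vec J)
   (v : vec I) (vs : vec J) : Prop :=
  exists (t : nat -> R) (vk : nat -> vec I) (vsk : nat -> vec J),
    (forall k, 0 < t k) /\ Un_cv t 0 /\ cvg1 vk v /\ cvg1 vsk vs /\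
    eventually (fun k => S (vadd a (vscale (t k) (vk k))) (vadd b (vscale (t k) (vsk k)))).

Lemma norm1_vpair (I J : finType) (u : vec I) (v : vec J) : norm1 (vpair u v) = norm1 u + norm1 v.
Proof. by rewrite /norm1 big_sumType. Qed.

Lemma norm1_inl (I J : finType) (p : vec (I + J)%type) : norm1 (fun i => p (inl i)) <= norm1 p.
Proof.
rewrite {2}/norm1 big_sumType /=.
have := @sumR_ge0 J (fun j => Rabs (p (inr j))) (fun j => Rabs_pos _). rewrite /norm1; lra.
Qed.

Lemma norm1_inr (I J : finType) (p : vec (I + J)%type) : norm1 (fun j => p (inr j)) <= norm1 p.
Proof.
rewrite {2}/norm1 big_sumType /=.
have := @sumR_ge0 I (fun j => Rabs (p (inl j))) (fun j => Rabs_pos _). rewrite /norm1; lra.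
Qed.

Lemma graph_tangentP (I J : finType) (S : vec I -> vec J -> Prop) a b v vs :
  tangent_cone (gph S) (vpair a b) (vpair v vs) <-> graph_tangent S a b v vs.
Proof.
rewrite tangent_cone_evP; split.
- move=> [t [wk [H1 [H2 [H3 H4]]]]].
  exists t, (fun k i => wk k (inl i)), (fun k j => wk k (inr j)); split=> //; split=> //; split; [|split].
  + move=> eps He; have [N HN] := H3 eps He; exists N => k Hk.
    apply: Rle_lt_trans (HN k Hk); exact: (norm1_inl (vsub (wk k) (vpair v vs))).
  + move=> eps He; have [N HN] := H3 eps He; exists N => k Hk.
    apply: Rle_lt_trans (HN k Hk); exact: (norm1_inr (vsub (wk k) (vpair v vs))).
  + exact: H4.
- move=> [t [vk [vsk [H1 [H2 [H3 [H4 H5]]]]]]].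
  exists t, (fun k => vpair (vk k) (vsk k)); split=> //; split=> //; split=> //.
  apply: cvg1_le => eps He.
  apply: (eventually_mono (eventually_and (H3 (eps/2) ltac:(lra)) (H4 (eps/2) ltac:(lra)))) => k [B1 B2].
  have -> : vsub (vpair (vk k) (vsk k)) (vpair v vs) = vpair (vsub (vk k) v) (vsub (vsk k) vs).
    by apply: vext => -[i|j].
  rewrite norm1_vpair; lra.
Qed.

Lemma graph_tangent0 (I J : finType) (S : vec I -> vec J -> Prop) a b : S a b -> graph_tangent S a b vzero vzero.
Proof.
move=> Hab; apply/graph_tangentP.
have -> : vpair (@vzero I) (@vzero J) = vzero by apply: vext => -[i|j].
exact: (tangent_cone0 (S := gph S)).
Qed.

Lemma dot_vpair (I J : finType) (a c : vec I) (b d : vec J) :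
  dot (vpair a b) (vpair c d) = dot a c + dot b d.
Proof. by rewrite /dot big_sumType. Qed.

Lemma vpair_eta (I J : finType) (p : vec (I + J)%type) :
  p = vpair (fun i => p (inl i)) (fun j => p (inr j)).
Proof. by apply: vext => -[i|j]. Qed.

Lemma polar_graph_tangent (I J : finType) (S : vec I -> vec J -> Prop) a b p q :
  polar (tangent_cone (gph S) (vpair a b)) (vpair p q) <->
  forall v vs, graph_tangent S a b v vs -> dot p v + dot q vs <= 0.
Proof.
split.
- move=> H v vs HT; rewrite -dot_vpair; apply: H; exact/graph_tangentP.
- move=> H w Hw; rewrite (vpair_eta w) dot_vpair; apply: H.
  apply/graph_tangentP; rewrite -vpair_eta //.
Qed.

Lemma choice_seq (T : Type) (d : T) (C : nat -> Prop) (P : nat -> T -> Prop) :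
  (forall k, C k -> exists x, P k x) -> exists s : nat -> T, forall k, C k -> P k (s k).
Proof.
move=> H.
have H' : forall k, exists x, C k -> P k x.
  move=> k; case: (classic (C k)) => Hc.
  - have [x Hx] := H k Hc; by exists x.
  - by exists d.
exists (fun k => proj1_sig (constructive_indefinite_description _ (H' k))).
move=> k; exact: (proj2_sig (constructive_indefinite_description _ (H' k))).
Qed.

Section LeftInverse.
Variables (I J : finType) (Mk : nat -> mat J I) (A : mat J I) (R0 : mat I J).
Variables (xik : nat -> vec J) (qk : nat -> vec I) (q : vec I).
Hypothesis HR0 : forall y, mulmv A (mulmv R0 y) = y.
Hypothesis HMk : forall eps, 0 < eps -> eventually (fun k => mnorm (msub (Mk k) A) <= eps).
Hypothesis Hq : cvg1 qk q.
Hypothesis Hxq : eventually (fun k => mulTmv (Mk k) (xik k) = qk k).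

Local Notation c := (mnorm R0 + 1).

Lemma left_inverse_eq : eventually (fun k =>
  xik k = mulTmv R0 (vsub (qk k) (mulTmv (msub (Mk k) A) (xik k)))).
Proof.
apply: (eventually_mono Hxq) => k <-; rewrite mulTmv_msub.
have -> : vsub (mulTmv (Mk k) (xik k)) (vsub (mulTmv (Mk k) (xik k)) (mulTmv A (xik k))) =
    mulTmv A (xik k) by apply: vext => i; rewrite /vsub; ring.
by rewrite (mulTmv_rinv HR0).
Qed.

Lemma left_inverse_bound y : norm1 (mulTmv R0 y) <= c * norm1 y.
Proof. apply: Rle_trans (mulTmv_bound _ _) _; apply: Rmult_le_compat_r; [exact: norm1_ge0 | lra]. Qed.

Lemma left_inverse_bounded : eventually (fun k => norm1 (xik k) <= 2 * c * (norm1 q + 1)).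
Proof.
have Hc : 0 < c by have := mnorm_ge0 R0; lra.
have Hhalf : 0 < / (2 * c) by apply: Rinv_0_lt_compat; lra.
apply: (eventually_mono (eventually_and (eventually_and left_inverse_eq (HMk Hhalf))
  (cvg1_bounded Hq))) => k [[E Hm] Hqb].
have Hx := norm1_ge0 (xik k); have Hm0 := mnorm_ge0 (msub (Mk k) A).
have H1 : norm1 (xik k) <= c * (norm1 (qk k) + mnorm (msub (Mk k) A) * norm1 (xik k)).
  rewrite {1}E; apply: Rle_trans (left_inverse_bound _) _; apply: Rmult_le_compat_l; first lra.
  by apply: Rle_trans (norm1_sub _ _) _; have := mulTmv_bound (msub (Mk k) A) (xik k); lra.
have H2 : c * (mnorm (msub (Mk k) A) * norm1 (xik k)) <= norm1 (xik k) / 2.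
  have : c * mnorm (msub (Mk k) A) <= / 2.
    have := Rmult_le_compat_l c _ _ (Rlt_le _ _ Hc) Hm.
    by replace (c * / (2 * c)) with (/ 2) by (field; lra).
  by move=> Hcm; have := Rmult_le_compat_r _ _ _ Hx Hcm; lra.
have : c * norm1 (qk k) <= c * (norm1 q + 1) by apply: Rmult_le_compat_l; lra.
lra.
Qed.

Lemma left_inverse_cvg : cvg1 xik (mulTmv R0 q) /\ mulTmv A (mulTmv R0 q) = q.
Proof.
have Hc : 0 < c by have := mnorm_ge0 R0; lra.
set B := 2 * c * (norm1 q + 1).
have HB : 0 < B by rewrite /B; have := norm1_ge0 q; nra.
have Hxi : cvg1 xik (mulTmv R0 q).
  apply: cvg1_le => eps He.
  have He1 : 0 < eps / (2 * c) by apply: Rdiv_lt_0_compat; lra.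
  have He2 : 0 < eps / (2 * c * B) by apply: Rdiv_lt_0_compat; nra.
  apply: (eventually_mono (eventually_and (eventually_and left_inverse_eq
    (eventually_and (HMk He2) left_inverse_bounded)) (Hq He1))) => k [[E [Hm Hb]] Hqk].
  rewrite -/B in Hb.
  have -> : vsub (xik k) (mulTmv R0 q) =
      mulTmv R0 (vsub (vsub (qk k) q) (mulTmv (msub (Mk k) A) (xik k))).
    by rewrite {1}E -mulTmv_sub; congr mulTmv; apply: vext => i; rewrite /vsub; ring.
  apply: Rle_trans (left_inverse_bound _) _.
  have H1 : norm1 (vsub (vsub (qk k) q) (mulTmv (msub (Mk k) A) (xik k))) <=
      eps / (2 * c) + eps / (2 * c * B) * B.
    apply: Rle_trans (norm1_sub _ _) _.
    have := mulTmv_bound (msub (Mk k) A) (xik k); have := mnorm_ge0 (msub (Mk k) A).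
    have := norm1_ge0 (xik k) => *.
    have : mnorm (msub (Mk k) A) * norm1 (xik k) <= eps / (2 * c * B) * B
      by apply: Rmult_le_compat; lra.
    lra.
  have E2 : eps / (2 * c) + eps / (2 * c * B) * B = eps / c by field; lra.
  rewrite E2 in H1; apply: Rle_trans (Rmult_le_compat_l c _ _ (Rlt_le _ _ Hc) H1) _.
  by right; field; lra.
split=> //; symmetry; apply: (cvg1_unique Hq).
apply: (cvg1_ext (u := fun k => mulTmv (Mk k) (xik k))) => //.
apply: (cvg1_mulmv_seq (Mk := fun k => mtr (Mk k)) (A := mtr A)) => // eps He.
by apply: (eventually_mono (HMk He)) => k; rewrite msub_mtr mnorm_mtr.
Qed.

End LeftInverse.

Section Preimage.
Variables (I J : finType) (F : vec I -> vec J) (M : vec I -> mat J I) (x0 : vec I).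
Variables (Theta : vec J -> Prop) (Omega : vec I -> Prop) (rho : R) (R0 : mat I J).
Hypothesis HD : forall x, is_fderiv F (M x) x.
Hypothesis HMc : cont_mat M x0.
Hypothesis HR0 : forall y, mulmv (M x0) (mulmv R0 y) = y.
Hypothesis Hrho : 0 < rho.
Hypothesis HOm : forall x, norm1 (vsub x x0) < rho -> (Omega x <-> Theta (F x)).

Local Notation A := (M x0).
Local Notation c := (mnorm R0 + 1).
(* Jacobian tolerance: with it the mean value inequality yields the
   linearization error 1/(2c) required by the Newton iteration. *)
Local Notation eps0 := (/ (2 * c * (INR #|J| + 1))).

Lemma rinv_bound_gt0 : 0 < c.
Proof. have := mnorm_ge0 R0; lra. Qed.

Lemma rinv_bound y : norm1 (mulmv R0 y) <= c * norm1 y.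
Proof.
apply: Rle_trans (mulmv_bound _ _) _; apply: Rmult_le_compat_r; [exact: norm1_ge0|lra].
Qed.

Lemma eps0_pos : 0 < eps0.
Proof. have := rinv_bound_gt0; have := pos_INR #|J| => *. apply: Rinv_0_lt_compat. nra. Qed.

Lemma regular_radius : exists r, 0 < r /\ r <= rho /\ forall z, norm1 (vsub z x0) < r -> mnorm (msub (M z) A) <= eps0.
Proof.
have [d [Hd Hz]] := HMc eps0_pos.
exists (Rmin d rho); split; first exact: Rmin_glb_lt.
split; first exact: Rmin_r.
move=> z Hzx; apply: Rlt_le; apply: Hz; apply: Rlt_le_trans Hzx (Rmin_l _ _).
Qed.

Variable r : R.
Hypothesis Hr : 0 < r.
Hypothesis Hrrho : r <= rho.
Hypothesis HMr : forall z, norm1 (vsub z x0) < r -> mnorm (msub (M z) A) <= eps0.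

Lemma linearization_error a b : norm1 (vsub a x0) < r -> norm1 (vsub b x0) < r ->
  norm1 (vsub (vsub (F a) (F b)) (mulmv A (vsub a b))) <= norm1 (vsub a b) / (2 * c).
Proof.
move=> Ha Hb.
apply: Rle_trans (mean_value_ineq (M := M) (A := A) (x0 := x0) (r := r) (eps := eps0) _ Ha Hb) _.
  move=> z Hz; split; [exact: HD | exact: HMr].
have := rinv_bound_gt0; have := pos_INR #|J|; have := norm1_ge0 (vsub a b) => *.
replace (INR #|J| * eps0 * norm1 (vsub a b)) with (norm1 (vsub a b) / (2 * c) * (INR #|J| / (INR #|J| + 1)))
  by (field; lra).
rewrite -[X in _ <= X]Rmult_1_r; apply: Rmult_le_compat_l.
  apply: Rmult_le_pos; [lra| apply: Rlt_le; apply: Rinv_0_lt_compat; lra].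
apply: (Rmult_le_reg_r (INR #|J| + 1)); first lra.
replace (INR #|J| / (INR #|J| + 1) * (INR #|J| + 1)) with (INR #|J|) by (field; lra). lra.
Qed.

Lemma solve_near x y : norm1 (vsub x x0) < r / 2 -> 2 * c * norm1 (vsub (F x) y) < r / 2 ->
  exists x', F x' = y /\ norm1 (vsub x' x) <= 2 * c * norm1 (vsub (F x) y).
Proof. move=> Hx Hy; exact: (newton_solution HR0 rinv_bound_gt0 rinv_bound linearization_error Hx Hy). Qed.

Lemma rinv_near z : norm1 (vsub z x0) < r -> exists R : mat I J, forall y, mulmv (M z) (mulmv R y) = y.
Proof.
move=> Hz; apply: (rinv_perturb HR0 rinv_bound_gt0 rinv_bound).
apply: Rle_trans (HMr Hz) _.
have := rinv_bound_gt0; have := pos_INR #|J| => *.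
apply: Rinv_le_contravar; first lra.
have : 2 * c * 1 <= 2 * c * (INR #|J| + 1) by apply: Rmult_le_compat_l; lra.
lra.
Qed.

Lemma preimage_near x : norm1 (vsub x x0) < r -> (Omega x <-> Theta (F x)).
Proof. move=> Hx; apply: HOm; lra. Qed.

Lemma ball_eventually z (t : nat -> R) (u : nat -> vec I) l q :
  norm1 (vsub z x0) < q -> Un_cv t 0 -> cvg1 u l ->
  eventually (fun k => norm1 (vsub (vadd z (vscale (t k) (u k))) x0) < q).
Proof.
move=> Hz Ht Hu.
apply: (eventually_mono (scale_cvg1_small Ht Hu (q - norm1 (vsub z x0)) ltac:(lra))) => k Hk.
have -> : vsub (vadd z (vscale (t k) (u k))) x0 = vadd (vsub z x0) (vscale (t k) (u k)).
  apply: vext => i; rewrite /vadd /vsub; ring.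
apply: Rle_lt_trans (norm1_add _ _) _; lra.
Qed.

Lemma jacobian_cvg (t : nat -> R) (u : nat -> vec I) l : Un_cv t 0 -> cvg1 u l ->
  forall eps, 0 < eps -> eventually (fun k => mnorm (msub (M (vadd x0 (vscale (t k) (u k)))) A) <= eps).
Proof.
move=> Ht Hu eps He.
have [d [Hd Hz]] := HMc He.
have H0 : norm1 (vsub x0 x0) < d.
  have -> : vsub x0 x0 = vzero by apply: vext => i; rewrite /vsub /vzero; ring.
  by rewrite norm1_zero.
apply: (eventually_mono (ball_eventually H0 Ht Hu)) => k Hk; apply: Rlt_le; exact: Hz.
Qed.

Lemma normal_preimage_of z mu : norm1 (vsub z x0) < r -> regular_normal Theta (F z) mu ->
  regular_normal Omega z (mulTmv (M z) mu).
Proof.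
move=> Hz [HT Hpol]; split; first by apply/(preimage_near Hz).
move=> w /tangent_cone_evP [t [wk [Ht0 [Ht [Hw HS]]]]].
rewrite dot_mulTmv; apply: Hpol; apply/tangent_cone_evP.
exists t, (fun k => vscale (/ t k) (vsub (F (vadd z (vscale (t k) (wk k)))) (F z))).
split=> //; split=> //; split; first exact: diff_quotient_cvg.
apply: (eventually_mono (eventually_and HS (ball_eventually Hz Ht Hw))) => k [HO Hb].
have -> : vadd (F z) (vscale (t k) (vscale (/ t k) (vsub (F (vadd z (vscale (t k) (wk k)))) (F z))))
  = F (vadd z (vscale (t k) (wk k))).
  apply: vext => i; rewrite /vadd /vscale /vsub; field; have := Ht0 k; lra.
by apply/(preimage_near Hb).
Qed.

Lemma residual_small z u (tau : nat -> R) (yk : nat -> vec J) :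
  (forall k, 0 < tau k) -> Un_cv tau 0 ->
  cvg1 (fun k => vscale (/ tau k) (vsub (yk k) (F z))) (mulmv (M z) u) ->
  forall eps, 0 < eps ->
    eventually (fun k => norm1 (vsub (F (vadd z (vscale (tau k) u))) (yk k)) <= eps * tau k).
Proof.
move=> Ht0 Ht Hy eps He.
have := cvg1_sub (diff_quotient_cvg (HD z) Ht0 Ht (cvg1_const u)) Hy.
have -> : vsub (mulmv (M z) u) (mulmv (M z) u) = vzero
  by apply: vext => i; rewrite /vsub /vzero; ring.
move=> Hd; apply: (eventually_mono (Hd eps He)) => k Hk.
have Htk := Ht0 k.
have E : vsub (vsub (vscale (/ tau k) (vsub (F (vadd z (vscale (tau k) u))) (F z)))
    (vscale (/ tau k) (vsub (yk k) (F z)))) vzero =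
    vscale (/ tau k) (vsub (F (vadd z (vscale (tau k) u))) (yk k))
  by apply: vext => i; rewrite /vsub /vscale /vzero; ring.
rewrite E norm1_scale Rabs_right in Hk; last by apply: Rle_ge; apply: Rlt_le; apply: Rinv_0_lt_compat.
have := Rmult_le_compat_l (tau k) _ _ (Rlt_le _ _ Htk) (Rlt_le _ _ Hk).
by rewrite -Rmult_assoc Rinv_r ?Rmult_1_l; lra.
Qed.

(* Newton's method, started at z + tau u, solves F = yk within o(tau). *)
Lemma lift_tangent_path z u (tau : nat -> R) (yk : nat -> vec J) :
  norm1 (vsub z x0) < r / 4 -> (forall k, 0 < tau k) -> Un_cv tau 0 ->
  cvg1 (fun k => vscale (/ tau k) (vsub (yk k) (F z))) (mulmv (M z) u) ->
  exists uk, cvg1 uk u /\ eventually (fun k => F (vadd z (vscale (tau k) (uk k))) = yk k).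
Proof.
move=> Hz Ht0 Ht Hy; have Hc := rinv_bound_gt0.
pose pk := fun k => vadd z (vscale (tau k) u).
have [s Hs] := choice_seq z (C := fun k => norm1 (vsub (pk k) x0) < r / 2 /\
    2 * c * norm1 (vsub (F (pk k)) (yk k)) < r / 2)
  (P := fun k x => F x = yk k /\ norm1 (vsub x (pk k)) <= 2 * c * norm1 (vsub (F (pk k)) (yk k)))
  (fun k HC => solve_near (proj1 HC) (proj2 HC)).
have Hres := residual_small Ht0 Ht Hy.
have Hcond : eventually (fun k => norm1 (vsub (pk k) x0) < r / 2 /\
    2 * c * norm1 (vsub (F (pk k)) (yk k)) < r / 2).
  have Hp : 0 < r / (4 * c) by apply: Rdiv_lt_0_compat; lra.
  have Hz2 : norm1 (vsub z x0) < r / 2 by lra.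
  apply: (eventually_mono (eventually_and (eventually_and
    (ball_eventually Hz2 Ht (cvg1_const u)) (Hres 1 Rlt_0_1))
    (Un_cv0_eventually Ht _ Hp))) => k [[H1 H2] H3].
  change (norm1 (vsub (F (pk k)) (yk k)) <= 1 * tau k) in H2.
  split; first exact: H1.
  have Htk := Ht0 k; rewrite Rabs_right in H3; last lra.
  have : 2 * c * norm1 (vsub (F (pk k)) (yk k)) <= 2 * c * (1 * tau k)
    by apply: Rmult_le_compat_l; lra.
  have : 2 * c * (1 * tau k) < 2 * c * (r / (4 * c)) by apply: Rmult_lt_compat_l; lra.
  have : 2 * c * (r / (4 * c)) = r / 2 by field; lra.
  lra.
exists (fun k => vscale (/ tau k) (vsub (s k) z)); split.
- apply: cvg1_le => eps He.
  have He' : 0 < eps / (2 * c) by apply: Rdiv_lt_0_compat; lra.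
  apply: (eventually_mono (eventually_and Hcond (Hres _ He'))) => k [HC HR].
  have [_ Hb] := Hs k HC; have Htk := Ht0 k.
  have -> : vsub (vscale (/ tau k) (vsub (s k) z)) u = vscale (/ tau k) (vsub (s k) (pk k))
    by apply: vext => i; rewrite /pk /vsub /vscale /vadd; field; lra.
  rewrite norm1_scale Rabs_right; last by apply: Rle_ge; apply: Rlt_le; apply: Rinv_0_lt_compat.
  apply: (Rmult_le_reg_l (tau k)) => //; rewrite -Rmult_assoc Rinv_r ?Rmult_1_l; last lra.
  apply: Rle_trans Hb _; apply: Rle_trans (Rmult_le_compat_l (2 * c) _ _ _ HR) _; first lra.
  by right; field; lra.
- apply: (eventually_mono Hcond) => k HC; have [HF _] := Hs k HC.
  have -> : vadd z (vscale (tau k) (vscale (/ tau k) (vsub (s k) z))) = s k.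
    by apply: vext => i; rewrite /vadd /vscale /vsub; field; have := Ht0 k; lra.
  exact: HF.
Qed.

Lemma tangent_preimage z u : norm1 (vsub z x0) < r / 4 -> tangent_cone Theta (F z) (mulmv (M z) u) -> tangent_cone Omega z u.
Proof.
move=> Hz /tangent_cone_evP [tau [zk [Ht0 [Ht [Hzk HT]]]]].
have Hy : cvg1 (fun k => vscale (/ tau k) (vsub (vadd (F z) (vscale (tau k) (zk k))) (F z))) (mulmv (M z) u).
  apply: cvg1_ext Hzk; apply: eventually_always => k; apply: vext => i.
  rewrite /vscale /vsub /vadd; field; have := Ht0 k; lra.
have [uk [Hu HF]] := lift_tangent_path Hz Ht0 Ht Hy.
apply/tangent_cone_evP; exists tau, uk; split=> //; split=> //; split=> //.
have Hz' : norm1 (vsub z x0) < r by lra.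
apply: (eventually_mono (eventually_and (eventually_and HF HT) (ball_eventually Hz' Ht Hu))) => k [[E HTk] Hb].
apply/(preimage_near Hb); rewrite E; exact: HTk.
Qed.

Lemma normal_preimage_mult_near z vs : norm1 (vsub z x0) < r / 4 -> regular_normal Omega z vs ->
  exists mu, regular_normal Theta (F z) mu /\ vs = mulTmv (M z) mu.
Proof.
move=> Hz [HO Hpol]; have Hz' : norm1 (vsub z x0) < r by lra.
have HT : Theta (F z) by apply/(preimage_near Hz').
have [R HR] := rinv_near Hz'.
exists (mulTmv R vs); split.
- split=> // zeta Hzeta; rewrite dot_mulTmv; apply: Hpol.
  by apply: tangent_preimage => //; rewrite HR.
- apply: (ker_polar_range HR) => w Hw; apply: Hpol; apply: tangent_preimage => //.
  by rewrite Hw; exact: tangent_cone0.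
Qed.

Section GraphTangent.
Variables (mu0 : vec J) (H : mat I I).
Hypothesis HH : is_fderiv (fun x => mulTmv (M x) mu0) H x0.

Lemma graph_tangent_preimage_of v xi : graph_tangent (regular_normal Theta) (F x0) mu0 (mulmv A v) xi ->
  graph_tangent (regular_normal Omega) x0 (mulTmv A mu0) v (vadd (mulmv H v) (mulTmv A xi)).
Proof.
move=> [tau [zk [xik [Ht0 [Ht [Hz [Hxi HS]]]]]]].
have Hy : cvg1 (fun k => vscale (/ tau k) (vsub (vadd (F x0) (vscale (tau k) (zk k))) (F x0))) (mulmv A v).
  apply: cvg1_ext Hz; apply: eventually_always => k; apply: vext => i.
  rewrite /vscale /vsub /vadd; field; have := Ht0 k; lra.
have Hx0 : norm1 (vsub x0 x0) < r / 4 by rewrite norm1_subvv; lra.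
have [vk [Hv HF]] := lift_tangent_path Hx0 Ht0 Ht Hy.
pose xk := fun k => vadd x0 (vscale (tau k) (vk k)).
exists tau, vk, (fun k => vadd (vscale (/ tau k) (vsub (mulTmv (M (xk k)) mu0) (mulTmv A mu0)))
                               (mulTmv (M (xk k)) (xik k))).
split=> //; split=> //; split=> //; split.
- apply: cvg1_add; first exact: (diff_quotient_cvg HH Ht0 Ht Hv).
  apply: (cvg1_mulmv_seq (Mk := fun k => mtr (M (xk k))) (A := mtr A)) => // eps He.
  apply: (eventually_mono (jacobian_cvg Ht Hv He)) => k Hk.
  by rewrite msub_mtr mnorm_mtr.
- have Hxr : norm1 (vsub x0 x0) < r by rewrite norm1_subvv.
  apply: (eventually_mono (eventually_and (eventually_and HF HS) (ball_eventually Hxr Ht Hv))) => k [[E HSk] Hb].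
  have Htk := Ht0 k.
  have -> : vadd (mulTmv A mu0) (vscale (tau k) (vadd (vscale (/ tau k) (vsub (mulTmv (M (xk k)) mu0) (mulTmv A mu0)))
                               (mulTmv (M (xk k)) (xik k)))) = mulTmv (M (xk k)) (vadd mu0 (vscale (tau k) (xik k))).
    rewrite mulTmv_add mulTmv_scale; apply: vext => i; rewrite /vadd /vscale /vsub; field; lra.
  apply: normal_preimage_of => //. rewrite /xk E //.
Qed.

Lemma graph_tangent_preimage_to v vs :
  graph_tangent (regular_normal Omega) x0 (mulTmv A mu0) v vs ->
  exists xi, graph_tangent (regular_normal Theta) (F x0) mu0 (mulmv A v) xi /\
             vs = vadd (mulmv H v) (mulTmv A xi).
Proof.
move=> [t [vk [vsk [Ht0 [Ht [Hv [Hvs HS]]]]]]].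
pose xk := fun k => vadd x0 (vscale (t k) (vk k)).
have Hx0 : norm1 (vsub x0 x0) < r / 4 by rewrite norm1_subvv; lra.
have Hcond := eventually_and (ball_eventually Hx0 Ht Hv) HS.
have [mu Hmu] := choice_seq mu0
  (C := fun k => norm1 (vsub (xk k) x0) < r / 4 /\
                 regular_normal Omega (xk k) (vadd (mulTmv A mu0) (vscale (t k) (vsk k))))
  (P := fun k m => regular_normal Theta (F (xk k)) m /\
                   vadd (mulTmv A mu0) (vscale (t k) (vsk k)) = mulTmv (M (xk k)) m)
  (fun k HC => normal_preimage_mult_near (proj1 HC) (proj2 HC)).
pose xik := fun k => vscale (/ t k) (vsub (mu k) mu0).
pose qk := fun k => vsub (vsk k) (vscale (/ t k) (vsub (mulTmv (M (xk k)) mu0) (mulTmv A mu0))).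
have Hq : cvg1 qk (vsub vs (mulmv H v)) := cvg1_sub Hvs (diff_quotient_cvg HH Ht0 Ht Hv).
have Hid : eventually (fun k => mulTmv (M (xk k)) (xik k) = qk k).
  apply: (eventually_mono Hcond) => k HC; have [_ E] := Hmu k HC; have Htk := Ht0 k.
  rewrite /xik mulTmv_scale mulTmv_sub -E.
  by apply: vext => i; rewrite /qk /vscale /vsub /vadd; field; lra.
have [Hxi Hql] := left_inverse_cvg HR0 (jacobian_cvg Ht Hv) Hq Hid.
exists (mulTmv R0 (vsub vs (mulmv H v))); split; last first.
  by rewrite Hql; apply: vext => i; rewrite /vadd /vsub; ring.
exists t, (fun k => vscale (/ t k) (vsub (F (xk k)) (F x0))), xik.
split=> //; split=> //; split; first exact: (diff_quotient_cvg (HD x0) Ht0 Ht Hv).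
split; first exact: Hxi.
apply: (eventually_mono Hcond) => k HC; have [HT _] := Hmu k HC; have Htk := Ht0 k.
have -> : vadd (F x0) (vscale (t k) (vscale (/ t k) (vsub (F (xk k)) (F x0)))) = F (xk k)
  by apply: vext => i; rewrite /vadd /vscale /vsub; field; lra.
have -> : vadd mu0 (vscale (t k) (xik k)) = mu k
  by apply: vext => i; rewrite /xik /vadd /vscale /vsub; field; lra.
exact: HT.
Qed.

End GraphTangent.
End Preimage.

Lemma graph_tangent_preimage (I J : finType) (F : vec I -> vec J) (M : vec I -> mat J I) x0
    (Theta : vec J -> Prop) (Omega : vec I -> Prop) mu0 (H : mat I I) (R0 : mat I J) :
  (forall x, is_fderiv F (M x) x) -> cont_mat M x0 ->
  (forall y, mulmv (M x0) (mulmv R0 y) = y) ->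
  near x0 (fun x => Omega x <-> Theta (F x)) ->
  is_fderiv (fun x => mulTmv (M x) mu0) H x0 ->
  forall v vs, graph_tangent (regular_normal Omega) x0 (mulTmv (M x0) mu0) v vs <->
   exists xi, graph_tangent (regular_normal Theta) (F x0) mu0 (mulmv (M x0) v) xi /\
              vs = vadd (mulmv H v) (mulTmv (M x0) xi).
Proof.
move=> HD HMc HR0 [rho [Hrho HOm]] HH v vs.
have [r [Hr [Hrr HMr]]] := regular_radius R0 HMc Hrho.
split; first exact: (graph_tangent_preimage_to HD HMc HR0 HOm Hr Hrr HMr HH).
by move=> [xi [Hxi ->]]; exact: (graph_tangent_preimage_of HD HMc HR0 HOm Hr Hrr HMr HH Hxi).
Qed.

Lemma normal_preimage_mult (I J : finType) (F : vec I -> vec J) (M : vec I -> mat J I) x0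
    (Theta : vec J -> Prop) (Omega : vec I -> Prop) (R0 : mat I J) vs :
  (forall x, is_fderiv F (M x) x) -> cont_mat M x0 ->
  (forall y, mulmv (M x0) (mulmv R0 y) = y) ->
  near x0 (fun x => Omega x <-> Theta (F x)) ->
  regular_normal Omega x0 vs -> exists mu, regular_normal Theta (F x0) mu /\ vs = mulTmv (M x0) mu.
Proof.
move=> HD HMc HR0 [rho [Hrho HOm]] Hvs.
have [r [Hr [Hrr HMr]]] := regular_radius R0 HMc Hrho.
apply: (normal_preimage_mult_near HD HR0 HOm Hr Hrr HMr) => //.
by rewrite norm1_subvv; lra.
Qed.

Definition reduced_polar {I J : finType} (T : vec J -> vec J -> Prop) (A : mat J I)
    (H : mat I I) (w us : vec I) : Prop :=
  forall v vs, (exists xi, T (mulmv A v) xi /\ vs = vadd (mulmv H v) (mulTmv A xi)) ->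
    dot us v + dot (vopp w) vs <= 0.

Lemma coderiv_preimage (I J : finType) (F : vec I -> vec J) (M : vec I -> mat J I) x0
    (Theta : vec J -> Prop) (Omega : vec I -> Prop) mu0 (H : mat I I) (R0 : mat I J) :
  (forall x, is_fderiv F (M x) x) -> cont_mat M x0 ->
  (forall y, mulmv (M x0) (mulmv R0 y) = y) ->
  near x0 (fun x => Omega x <-> Theta (F x)) ->
  is_fderiv (fun x => mulTmv (M x) mu0) H x0 ->
  forall w us, regular_coderiv (regular_normal Omega) x0 (mulTmv (M x0) mu0) w us <->
  regular_normal Omega x0 (mulTmv (M x0) mu0) /\
  reduced_polar (graph_tangent (regular_normal Theta) (F x0) mu0) (M x0) H w us.
Proof.
move=> HD HMc HR0 HOm HH w us; rewrite /regular_coderiv /regular_normal polar_graph_tangent.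
apply: and_iff_compat_l; split=> Hp v vs HT; apply: Hp; exact/(graph_tangent_preimage HD HMc HR0 HOm HH).
Qed.

Section ReducedPolarComp.
Variables (I S D : finType) (A : mat S I) (B : mat D S) (Hg : mat I I) (Hh : mat S S).
Variables (TQ : vec D -> vec D -> Prop) (Rc : mat I D).
Hypothesis Hgs : forall i j, Hg i j = Hg j i.
Hypothesis Hhs : forall i j, Hh i j = Hh j i.
Hypothesis HT0 : TQ vzero vzero.
Hypothesis HRc : forall y, mulmv (mmul B A) (mulmv Rc y) = y.

Local Notation C := (mmul B A).
Local Notation HF := (madd Hg (mmul (mtr A) (mmul Hh A))).

Lemma HF_sym_entry i j : HF i j = HF j i.
Proof.
rewrite /madd /mmul /mtr Hgs; congr (_ + _).
transitivity (\big[Rplus/0]_(k : S) \big[Rplus/0]_(l : S) (A k i * Hh k l * A l j)).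
  apply: eq_bigr => k _; rewrite big_distrr /=; apply: eq_bigr => l _; ring.
transitivity (\big[Rplus/0]_(k : S) \big[Rplus/0]_(l : S) (A k j * Hh k l * A l i)); last first.
  apply: eq_bigr => k _; rewrite big_distrr /=; apply: eq_bigr => l _; ring.
rewrite exchange_big; apply: eq_bigr => k _; apply: eq_bigr => l _; rewrite Hhs; ring.
Qed.

Lemma reduced_polar_comp_to w us : reduced_polar TQ C HF w us ->
  exists y, reduced_polar TQ B Hh (mulmv A w) y /\ us = vadd (mulmv Hg w) (mulTmv A y).
Proof.
move=> G; set p := vsub us (mulmv HF w).
have G' : forall v xi, TQ (mulmv C v) xi -> dot p v - dot (mulmv C w) xi <= 0.
  move=> v xi HQ; have := G v _ (ex_intro _ xi (conj HQ erefl)).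
  have e1 : dot w (mulmv HF v) = dot (mulmv HF w) v by rewrite (dot_mulmv_sym HF_sym_entry).
  have e2 : dot (mulmv C w) xi = dot w (mulTmv C xi) by rewrite dot_mulmv.
  rewrite /p dot_subl dot_oppl dot_addr; lra.
have Hp : p = mulTmv C (mulTmv Rc p).
  apply: (ker_polar_range HRc) => v Hv; have := G' v vzero ltac:(by rewrite Hv).
  by rewrite dot_zeror; lra.
set nu := mulTmv Rc p in Hp.
exists (vadd (mulmv Hh (mulmv A w)) (mulTmv B nu)); split.
- move=> z eta [xi [HQ ->]].
  have Hz : mulmv C (mulmv Rc (mulmv B z)) = mulmv B z by rewrite HRc.
  have := G' (mulmv Rc (mulmv B z)) xi ltac:(by rewrite Hz).
  have f1 : dot p (mulmv Rc (mulmv B z)) = dot nu (mulmv B z) by rewrite Hp dot_mulTmv Hz.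
  have f2 : dot (mulmv A w) (mulmv Hh z) = dot (mulmv Hh (mulmv A w)) z
    by rewrite (dot_mulmv_sym Hhs).
  have f3 : dot (mulmv A w) (mulTmv B xi) = dot (mulmv C w) xi
    by rewrite mulmv_mmul [RHS]dot_mulmv.
  rewrite dot_addl dot_mulTmv dot_oppl dot_addr; lra.
- have -> : us = vadd (mulmv HF w) p by rewrite /p; apply: vext => i; rewrite /vadd /vsub; ring.
  rewrite Hp mulTmv_mmul mulTmv_add mulmv_madd mulmv_mmul mulmv_mtr mulmv_mmul.
  by apply: vext => i; rewrite /vadd; ring.
Qed.

Lemma reduced_polar_comp_of w us y : reduced_polar TQ B Hh (mulmv A w) y ->
  us = vadd (mulmv Hg w) (mulTmv A y) -> reduced_polar TQ C HF w us.
Proof.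
move=> Hpol -> v vs [xi [HQ ->]].
have := Hpol (mulmv A v) (vadd (mulmv Hh (mulmv A v)) (mulTmv B xi))
  (ex_intro _ xi (conj (eq_ind _ (fun a => TQ a xi) HQ _ (mulmv_mmul B A v)) erefl)).
have g1 : dot w (mulmv HF v) = dot w (mulmv Hg v) + dot (mulmv A w) (mulmv Hh (mulmv A v)).
  rewrite mulmv_madd dot_addr mulmv_mmul mulmv_mtr; congr (_ + _).
  by rewrite -dot_mulmv mulmv_mmul.
have g2 : dot (mulmv Hg w) v = dot w (mulmv Hg v) by rewrite (dot_mulmv_sym Hgs).
have g3 : dot w (mulTmv C xi) = dot (mulmv A w) (mulTmv B xi)
  by rewrite -dot_mulmv mulmv_mmul dot_mulmv.
rewrite !dot_oppl !dot_addr !dot_addl [dot (mulTmv A y) v]dot_mulTmv; lra.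
Qed.

Lemma reduced_polar_comp w us : reduced_polar TQ C HF w us <->
  exists y, reduced_polar TQ B Hh (mulmv A w) y /\ us = vadd (mulmv Hg w) (mulTmv A y).
Proof.
split; first exact: reduced_polar_comp_to.
by move=> [y [Hy Hus]]; exact: reduced_polar_comp_of Hy Hus.
Qed.

End ReducedPolarComp.

Lemma C2_fderiv (I J : finType) (f : vec I -> vec J) : C2 f ->
  exists (Jf : vec I -> mat J I) (K : vec I -> J -> mat I I),
    (forall x, is_fderiv f (Jf x) x) /\ (forall x, cont_mat Jf x) /\
    (forall x k, is_fderiv (fun y => Jf y k) (K x k) x).
Proof.
move=> [Jf [K [HJ [HK _]]]]; exists Jf, K.
have HK' : forall x k, is_fderiv (fun y => Jf y k) (K x k) x
  by move=> x k; apply/deriv_at_fderiv; exact: HK.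
split; first by move=> x; apply/deriv_at_fderiv.
split=> // x; apply: cont_mat_rows => k; exact: fderiv_cont (HK' x k).
Qed.

Lemma fderiv_dot_l (I J : finType) (f : vec I -> vec J) A x (mu : vec J) :
  is_fderiv f A x -> is_fderiv (fun z (_ : unit) => dot mu (f z)) (fun _ j => mulTmv A mu j) x.
Proof.
move=> Hf; have := fderiv_mulmv_l (fun (_ : unit) j => mu j) Hf.
have -> : mmul (fun (_ : unit) j => mu j) A = (fun _ j => mulTmv A mu j)
  by apply: mext => u j; rewrite /mmul /mulTmv; apply: eq_bigr => k _; ring.
by [].
Qed.

Lemma fderiv_jacobian_tr (I J : finType) (f : vec I -> vec J) Jf (K : vec I -> J -> mat I I)
    (mu : vec J) z :
  (forall x, is_fderiv f (Jf x) x) -> (forall x k, is_fderiv (fun y => Jf y k) (K x k) x) ->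
  exists Hm : mat I I, is_fderiv (fun y => mulTmv (Jf y) mu) Hm z /\ forall i j, Hm i j = Hm j i.
Proof.
move=> Df DK.
have DHm : is_fderiv (fun y => mulTmv (Jf y) mu)
    (fun j i => \big[Rplus/0]_(k : J) (mu k * K z k j i)) z.
  apply: fderiv_ext (fderiv_sum mu (fun k => DK z k)) => y.
  by apply: vext => j; rewrite /mulTmv; apply: eq_bigr => k _; ring.
eexists; split; first exact: DHm.
exact: hessian_sym (fun y => fderiv_dot_l mu (Df y)) DHm.
Qed.

Lemma hessian_fderiv (I J : finType) (f : vec I -> vec J) Jf (lam : vec J) Hess x :
  (forall y, is_fderiv f (Jf y) y) -> is_hessian (fun y => dot lam (f y)) Hess x ->
  is_fderiv (fun y => mulTmv (Jf y) lam) Hess x /\ forall i j, Hess i j = Hess j i.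
Proof.
move=> Df [G [HG HGd]].
have DG : forall y, is_fderiv (fun z (_ : unit) => dot lam (f z)) (fun _ j => G y j) y
  by move=> y; apply/deriv_at_fderiv; exact: HG.
have DH : is_fderiv G Hess x by apply/deriv_at_fderiv.
have EG : forall y, G y = mulTmv (Jf y) lam.
  move=> y; have E := fderiv_unique (DG y) (fderiv_dot_l lam (Df y)).
  by apply: vext => j; exact: (f_equal (fun m => m tt j) E).
split; first exact: fderiv_ext EG DH.
exact: hessian_sym DG DH.
Qed.

Lemma fderiv_jacobian_tr_comp (I S D : finType) (g : vec I -> vec S) (Jg : vec I -> mat S I)
    (Jh : vec S -> mat D S) (mu : vec D) (Hg : mat I I) (Hh : mat S S) x :
  (forall y, is_fderiv g (Jg y) y) -> cont_mat Jg x ->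
  is_fderiv (fun y => mulTmv (Jg y) (mulTmv (Jh (g x)) mu)) Hg x ->
  is_fderiv (fun z => mulTmv (Jh z) mu) Hh (g x) ->
  is_fderiv (fun y => mulTmv (mmul (Jh (g y)) (Jg y)) mu)
    (madd Hg (mmul (mtr (Jg x)) (mmul Hh (Jg x)))) x.
Proof.
move=> Dg cJg DHg DHh.
by apply: fderiv_ext (fderiv_mulTmv cJg DHg (fderiv_comp (Dg x) DHh)) => y; rewrite mulTmv_mmul.
Qed.

Lemma surj_mmul (I S D : finType) (A : mat S I) (B : mat D S) :
  (forall y, exists z, mulmv B z = y) ->
  (forall z, exists u k, mulmv B k = vzero /\ z = vadd (mulmv A u) k) ->
  forall y, exists u, mulmv (mmul B A) u = y.
Proof.
move=> HB HA y; have [z Hz] := HB y; have [u [k [Hk Hzk]]] := HA z.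
exists u; rewrite mulmv_mmul -Hz Hzk mulmv_add Hk.
by apply: vext => i; rewrite /vadd /vzero; ring.
Qed.

Lemma near_preimage_of_nbhd (I : finType) (D P V : vec I -> Prop) z0 :
  is_neighborhood V z0 -> (forall z, (D z /\ V z) <-> (V z /\ P z)) ->
  near z0 (fun z => D z <-> P z).
Proof.
move=> [r [Hr HV]] HA; exists r; split=> // z Hz.
have := HV z (Rle_lt_trans _ _ _ (vnorm_le_norm1 _) Hz); have := HA z; tauto.
Qed.

Lemma near_comp (I J : finType) (g : vec I -> vec J) (P : vec J -> Prop) x :
  cont_vec g x -> near (g x) P -> near x (fun y => P (g y)).
Proof. by move=> Hg [d [Hd HP]]; apply: (near_mono (Hg _ Hd)) => y /HP. Qed.
Theorem mainTheorem6 (n s d : nat)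
    (g : vec 'I_n -> vec 'I_s) (D : vec 'I_s -> Prop) (xbar : vec 'I_n)
    (Theta : vec 'I_d -> Prop) (h : vec 'I_s -> vec 'I_d) (V : vec 'I_s -> Prop)
    (Jg : mat 'I_s 'I_n) (Jh : mat 'I_d 'I_s)
    (xstar : vec 'I_n) (lam : vec 'I_s) (Hess : mat 'I_n 'I_n) :
  C2 g ->
  is_closed D ->
  D (g xbar) ->
  (* (A1) *)
  is_closed Theta ->
  C2 h ->
  is_neighborhood V (g xbar) ->
  deriv_at h Jh (g xbar) ->
  (forall y : vec 'I_d, exists z : vec 'I_s, mulmv Jh z = y) ->
  (forall z, (D z /\ V z) <-> (V z /\ Theta (h z))) ->
  (* (A2) *)
  deriv_at g Jg xbar ->
  (forall z : vec 'I_s, exists (u : vec 'I_n) (k : vec 'I_s),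
      mulmv Jh k = vzero /\ z = vadd (mulmv Jg u) k) ->
  (* xbar^* and lambda-bar *)
  regular_normal (fun x => D (g x)) xbar xstar ->
  regular_normal D (g xbar) lam ->
  mulTmv Jg lam = xstar ->
  is_hessian (fun x => dot lam (g x)) Hess xbar ->
  forall (w : vec 'I_n) (ustar : vec 'I_n),
    regular_coderiv (regular_normal (fun x => D (g x))) xbar xstar w ustar
    <->
    exists y : vec 'I_s,
      regular_coderiv (regular_normal D) (g xbar) lam (mulmv Jg w) y /\
      ustar = vadd (mulmv Hess w) (mulTmv Jg y).
Proof.
move=> Cg _ _ _ Ch HVn HJh0 Hsurj HA1 HJg0 HA2 Hxs Hlam Hxl HHess w ustar.
have [Jgf [Kg [Dg [cJg DKg]]]] := C2_fderiv Cg.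
have [Jhf [Kh [Dh [cJh DKh]]]] := C2_fderiv Ch.
have EJg : Jg = Jgf xbar by apply: fderiv_unique (Dg xbar); apply/deriv_at_fderiv.
have EJh : Jh = Jhf (g xbar) by apply: fderiv_unique (Dh (g xbar)); apply/deriv_at_fderiv.
subst Jg Jh xstar.
have HOmD := near_preimage_of_nbhd HVn HA1.
have HOmG := near_comp (fderiv_cont (Dg xbar)) HOmD.
have [R0h HR0h] := surj_rinv Hsurj.
have [RF HRF] := surj_rinv (surj_mmul Hsurj HA2).
have [mu [Hmu Hlm]] := normal_preimage_mult Dh (cJh _) HR0h HOmD Hlam.
have [Hh [DHh Hhs]] := fderiv_jacobian_tr mu (g xbar) Dh DKh.
have [DHess Hgs] := hessian_fderiv Dg HHess.
rewrite Hlm in DHess.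
have DF : forall x, is_fderiv (fun y => h (g y)) (mmul (Jhf (g x)) (Jgf x)) x
  by move=> x; exact: fderiv_comp (Dg x) (Dh _).
have cF : cont_mat (fun x => mmul (Jhf (g x)) (Jgf x)) xbar
  by exact: cont_mat_mmul (cont_mat_comp (cJh _) (fderiv_cont (Dg _))) (cJg _).
have DHF := fderiv_jacobian_tr_comp Dg (cJg xbar) DHess DHh.
have ED := coderiv_preimage Dh (cJh _) HR0h HOmD DHh (mulmv (Jgf xbar) w).
rewrite Hlm -mulTmv_mmul (coderiv_preimage DF cF HRF HOmG DHF).
rewrite (reduced_polar_comp Hgs Hhs (graph_tangent0 Hmu) HRF).
split=> [[_ [y [Hy ->]]] | [y [/ED [_ Hy] ->]]].
- by exists y; split=> //; apply/ED; rewrite -Hlm.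
- by split; [rewrite mulTmv_mmul -Hlm | exists y].
Qed.
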